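(* Consider the system \[ \begin{aligned} \dot S_h(t)&=\beta_h-C_{vh}\frac{I_v(t)}{N_v(t)}S_h(t)-\mu_hS_h(t),\\ \dot I_h(t)&=C_{vh}\frac{I_v(t-\tau)}{N_v(t-\tau)}S_h(t-\tau)-\mu_hI_h(t),\\ \dot S_v(t)&=\beta_v-C_{hv}I_h(t)S_v(t)-\mu_vS_v(t),\\ \dot I_v(t)&=C_{hv}I_h(t)S_v(t)-\mu_vI_v(t), \end{aligned} \] with $N_v=S_v+I_v$ and positive parameters $\beta_h,\beta_v,\mu_h,\mu_v,C_{vh},C_{hv}$. Let $E^0=(\beta_h/\mu_h,0,\beta_v/\mu_v,0)^T$ be its disease-free equilibrium and $R_0=\sqrt{C_{vh}C_{hv}\beta_h/(\mu_h^2\mu_v)}$. Then for any $\tau\ge0$, $E^0$ is locally asymptotically stable if $R_0<1$ and unstable if $R_0>1$.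
   Context: The phase space is $C_+=\{\varphi\in C([-\tau,0],\mathbb{R}_+^4):\varphi_3(\theta)+\varphi_4(\theta)>0\ \forall\theta\in[-\tau,0]\}$ with the sup-norm. *)

From Stdlib Require Import Reals.
Open Scope R_scope.

Definition cont_on (f : R -> R) (a b : R) : Prop :=
  forall x, a <= x <= b -> forall eps, 0 < eps ->
    exists d, 0 < d /\ forall y, a <= y <= b -> Rabs (y - x) < d ->
      Rabs (f y - f x) < eps.

Definition cont_from (f : R -> R) (a : R) : Prop :=
  forall x, a <= x -> forall eps, 0 < eps ->
    exists d, 0 < d /\ forall y, a <= y -> Rabs (y - x) < d ->
      Rabs (f y - f x) < eps.

Definition in_Cplus (tau : R) (p1 p2 p3 p4 : R -> R) : Prop :=
  cont_on p1 (- tau) 0 /\ cont_on p2 (- tau) 0 /\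
  cont_on p3 (- tau) 0 /\ cont_on p4 (- tau) 0 /\
  forall th, - tau <= th <= 0 ->
    0 <= p1 th /\ 0 <= p2 th /\ 0 <= p3 th /\ 0 <= p4 th /\
    0 < p3 th + p4 th.

(* (x1,x2,x3,x4) = (S_h, I_h, S_v, I_v) is a (global) solution on [-tau, +oo)
   of the delayed host-vector system with initial function phi = (p1,..,p4):
   continuous on [-tau,+oo), equal to phi on [-tau,0], and satisfying the
   ODEs for t > 0 (N_v = S_v + I_v). *)
Definition is_solution (bh bv muh muv Cvh Chv tau : R)
    (p1 p2 p3 p4 x1 x2 x3 x4 : R -> R) : Prop :=
  cont_from x1 (- tau) /\ cont_from x2 (- tau) /\
  cont_from x3 (- tau) /\ cont_from x4 (- tau) /\
  (forall th, - tau <= th <= 0 ->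
     x1 th = p1 th /\ x2 th = p2 th /\ x3 th = p3 th /\ x4 th = p4 th) /\
  (forall t, 0 < t ->
     derivable_pt_lim x1 t
       (bh - Cvh * (x4 t / (x3 t + x4 t)) * x1 t - muh * x1 t) /\
     derivable_pt_lim x2 t
       (Cvh * (x4 (t - tau) / (x3 (t - tau) + x4 (t - tau))) * x1 (t - tau)
        - muh * x2 t) /\
     derivable_pt_lim x3 t (bv - Chv * x2 t * x3 t - muv * x3 t) /\
     derivable_pt_lim x4 t (Chv * x2 t * x3 t - muv * x4 t)).

(* sup-norm distance of phi to the point e = (e1,..,e4) is < d
   (max-norm on R^4; the sup over the compact [-tau,0] is attained) *)
Definition phi_near (tau : R) (p1 p2 p3 p4 : R -> R) (e1 e2 e3 e4 d : R) :=
  forall th, - tau <= th <= 0 ->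
    Rabs (p1 th - e1) < d /\ Rabs (p2 th - e2) < d /\
    Rabs (p3 th - e3) < d /\ Rabs (p4 th - e4) < d.

Definition eq_stable (bh bv muh muv Cvh Chv tau e1 e2 e3 e4 : R) : Prop :=
  forall eps, 0 < eps -> exists d, 0 < d /\
    forall p1 p2 p3 p4 x1 x2 x3 x4,
      in_Cplus tau p1 p2 p3 p4 -> phi_near tau p1 p2 p3 p4 e1 e2 e3 e4 d ->
      is_solution bh bv muh muv Cvh Chv tau p1 p2 p3 p4 x1 x2 x3 x4 ->
      forall t, 0 <= t ->
        Rabs (x1 t - e1) < eps /\ Rabs (x2 t - e2) < eps /\
        Rabs (x3 t - e3) < eps /\ Rabs (x4 t - e4) < eps.

Definition eq_attractive (bh bv muh muv Cvh Chv tau e1 e2 e3 e4 : R) : Prop :=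
  exists d, 0 < d /\
    forall p1 p2 p3 p4 x1 x2 x3 x4,
      in_Cplus tau p1 p2 p3 p4 -> phi_near tau p1 p2 p3 p4 e1 e2 e3 e4 d ->
      is_solution bh bv muh muv Cvh Chv tau p1 p2 p3 p4 x1 x2 x3 x4 ->
      forall eps, 0 < eps -> exists T, forall t, T <= t ->
        Rabs (x1 t - e1) < eps /\ Rabs (x2 t - e2) < eps /\
        Rabs (x3 t - e3) < eps /\ Rabs (x4 t - e4) < eps.

Definition loc_asym_stable (bh bv muh muv Cvh Chv tau e1 e2 e3 e4 : R) : Prop :=
  eq_stable bh bv muh muv Cvh Chv tau e1 e2 e3 e4 /\
  eq_attractive bh bv muh muv Cvh Chv tau e1 e2 e3 e4.

Definition eq_unstable (bh bv muh muv Cvh Chv tau e1 e2 e3 e4 : R) : Prop :=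
  ~ eq_stable bh bv muh muv Cvh Chv tau e1 e2 e3 e4.

(* Write E0 = (Sh0, 0, Sv0, 0) with Sh0 = bh/muh, Sv0 = bv/muv; R0 < 1 means Cvh Chv Sh0 < muh muv.
   Then some c satisfies Cvh Sh0 < c Sv0 muh and c Chv Sv0 < muv. Since N_v = S_v + I_v relaxes
   exponentially to Sv0, a first-touch argument shows that |S_h - Sh0|, |I_h| and c |I_v| stay below
   m exp (- lam t) for small m and lam: on that barrier each deviation y obeys y' = - mu y + r with
   |r| < (mu - lam) |y|. For R0 > 1 both inequalities reverse, and from a constant history with a
   small infected population I_h and c I_v stay above m exp (s t) for as long as the solution remains
   near E0, so it cannot remain near E0. This needs an actual solution: Picard iteration gives one
   for the system truncated to a box, which is globally Lipschitz, and the box is invariant, so the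
   truncation is never active. *)

From Stdlib Require Import Reals Lra Lia Classical List.
From Coquelicot Require Import Coquelicot.
Import ListNotations.
Open Scope R_scope.

(** * One-sided continuity and derivatives *)

Lemma cont_from_iff_limit f a :
  cont_from f a <-> forall x, a <= x -> limit1_in f (fun y => a <= y) (f x) x.
Proof.
  split; intros H x Hx eps Heps; destruct (H x Hx eps Heps) as [d [Hd Hfd]];
    exists d; split; auto; [intros y [Hy Hyx] | intros y Hy Hyx]; apply Hfd; auto.
Qed.

Lemma cont_from_plus f g a : cont_from f a -> cont_from g a -> cont_from (fun x => f x + g x) a.
Proof. rewrite !cont_from_iff_limit. intros; apply limit_plus; auto. Qed.

Lemma cont_from_minus f g a : cont_from f a -> cont_from g a -> cont_from (fun x => f x - g x) a.
Proof. rewrite !cont_from_iff_limit. intros; apply limit_minus; auto. Qed.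

Lemma cont_from_mult f g a : cont_from f a -> cont_from g a -> cont_from (fun x => f x * g x) a.
Proof. rewrite !cont_from_iff_limit. intros; apply limit_mul; auto. Qed.

Lemma cont_from_const c a : cont_from (fun _ => c) a.
Proof. intros x _ eps Heps. exists 1. split; [lra|]. intros. rewrite Rminus_diag, Rabs_R0; lra. Qed.

Lemma cont_from_scal c f a : cont_from f a -> cont_from (fun x => c * f x) a.
Proof. intros; apply cont_from_mult; auto using cont_from_const. Qed.

Lemma cont_from_le f a b : cont_from f a -> a <= b -> cont_from f b.
Proof.
  intros H Hab x Hx eps Heps. destruct (H x ltac:(lra) eps Heps) as [d [Hd Hfd]].
  exists d. split; auto. intros y Hy. apply Hfd; lra.
Qed.

Lemma cont_from_continuity f a : (forall x, continuity_pt f x) -> cont_from f a.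
Proof.
  intros H x _ eps Heps. destruct (H x eps Heps) as [d [Hd Hfd]].
  exists d. split; [lra|]. intros y _ Hy. destruct (Req_dec y x) as [->|Hne].
  - rewrite Rminus_diag, Rabs_R0; lra.
  - apply (Hfd y). repeat split; auto.
Qed.

Lemma cont_from_lipschitz f K a :
  0 <= K -> (forall t s, Rabs (f t - f s) <= K * Rabs (t - s)) -> cont_from f a.
Proof.
  intros HK Hf x _ eps Heps. exists (eps / (K + 1)). split; [apply Rdiv_lt_0_compat; lra|].
  intros y _ Hy. eapply Rle_lt_trans; [apply Hf|].
  apply Rle_lt_trans with ((K + 1) * Rabs (y - x)); [generalize (Rabs_pos (y - x)); nra|].
  apply Rmult_lt_compat_l with (r := K + 1) in Hy; [|lra].
  replace ((K + 1) * (eps / (K + 1))) with eps in Hy by (field; lra). lra.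
Qed.

Lemma dlim_eq f x a b : derivable_pt_lim f x a -> a = b -> derivable_pt_lim f x b.
Proof. intros H <-; exact H. Qed.

Lemma dlim_plus f g x a b : derivable_pt_lim f x a -> derivable_pt_lim g x b ->
  derivable_pt_lim (fun t => f t + g t) x (a + b).
Proof. apply derivable_pt_lim_plus. Qed.

Lemma dlim_minus f g x a b : derivable_pt_lim f x a -> derivable_pt_lim g x b ->
  derivable_pt_lim (fun t => f t - g t) x (a - b).
Proof. apply derivable_pt_lim_minus. Qed.

Lemma dlim_mult f g x a b : derivable_pt_lim f x a -> derivable_pt_lim g x b ->
  derivable_pt_lim (fun t => f t * g t) x (a * g x + f x * b).
Proof. apply derivable_pt_lim_mult. Qed.

Lemma dlim_const c x : derivable_pt_lim (fun _ => c) x 0.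
Proof. apply derivable_pt_lim_const. Qed.

Lemma dlim_scal c f x a : derivable_pt_lim f x a -> derivable_pt_lim (fun t => c * f t) x (c * a).
Proof.
  intros H. replace (c * a) with (0 * f x + c * a) by ring.
  apply dlim_mult; [apply dlim_const|exact H].
Qed.

Lemma dlim_exp_scal k x : derivable_pt_lim (fun t => exp (k * t)) x (k * exp (k * x)).
Proof.
  assert (H := derivable_pt_lim_comp (fun t => k * t) exp x k (exp (k * x))).
  unfold comp in H. replace (k * exp (k * x)) with (exp (k * x) * k) by ring.
  apply H; [|apply derivable_pt_lim_exp].
  assert (Hk := dlim_scal k (fun t => t) x 1 (derivable_pt_lim_id x)).
  rewrite Rmult_1_r in Hk. exact Hk.
Qed.

Lemma cont_from_exp_scal k a : cont_from (fun t => exp (k * t)) a.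
Proof.
  apply cont_from_continuity. intros x. apply derivable_continuous_pt.
  exists (k * exp (k * x)). apply dlim_exp_scal.
Qed.

Lemma exp_le_exp x y : x <= y -> exp x <= exp y.
Proof. intros [Hlt|Heq]; [left; apply exp_increasing; auto|rewrite Heq; lra]. Qed.

Lemma exp_le_1 x : x <= 0 -> exp x <= 1.
Proof. intros. rewrite <- exp_0. apply exp_le_exp. lra. Qed.

Lemma exp_ge_1 x : 0 <= x -> 1 <= exp x.
Proof. intros. rewrite <- exp_0. apply exp_le_exp. lra. Qed.

Lemma constant_of_derive_zero g :
  cont_from g 0 -> (forall t, 0 < t -> derivable_pt_lim g t 0) -> forall t, 0 <= t -> g t = g 0.
Proof.
  intros Hc Hd t [Ht|<-]; [|reflexivity].
  assert (Hflat : forall a, 0 < a <= t -> g t = g a).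
  { intros a Ha.
    destruct (MVT_gen g a t (fun _ => 0)) as [c [_ Hc0]].
    - intros x Hx. rewrite Rmin_left in Hx by lra. apply is_derive_Reals, Hd. lra.
    - intros x Hx. rewrite Rmin_left in Hx by lra.
      apply derivable_continuous_pt. exists 0. apply Hd. lra.
    - lra. }
  apply Rminus_diag_uniq, Rabs_eq_0, Rle_antisym; [|apply Rabs_pos].
  apply Rle_plus_epsilon. intros eps Heps. rewrite Rplus_0_l.
  destruct (Hc 0 (Rle_refl 0) eps Heps) as [d [Hdpos Hclose]].
  set (a := Rmin (d / 2) t).
  assert (Ha : 0 < a <= t) by (split; [apply Rmin_glb_lt; lra|apply Rmin_r]).
  assert (Had : a <= d / 2) by apply Rmin_l.
  rewrite (Hflat a Ha). left. apply Hclose; [lra|]. rewrite Rminus_0_r, Rabs_right; lra.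
Qed.

Lemma linear_relaxation (b m : R) (N : R -> R) :
  0 < m -> cont_from N 0 -> (forall t, 0 < t -> derivable_pt_lim N t (b - m * N t)) ->
  forall t, 0 <= t -> N t = b / m + (N 0 - b / m) * exp (- m * t).
Proof.
  intros Hm Hc Hd t Ht.
  set (g := fun s => (N s - b / m) * exp (m * s)).
  assert (Hg : g t = g 0).
  { apply constant_of_derive_zero; auto.
    - apply cont_from_mult; [apply cont_from_minus; auto using cont_from_const|apply cont_from_exp_scal].
    - intros s Hs.
      assert (H := dlim_mult _ _ s _ _
                     (dlim_minus _ _ s _ _ (Hd s Hs) (dlim_const (b / m) s)) (dlim_exp_scal m s)).
      eapply dlim_eq; [exact H|]. cbv beta. field. lra. }
  unfold g in Hg. rewrite Rmult_0_r, exp_0, Rmult_1_r in Hg.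
  assert (Hinv : exp (m * t) * exp (- m * t) = 1).
  { rewrite <- exp_plus. replace (m * t + - m * t) with 0 by ring. apply exp_0. }
  replace (N t) with (b / m + (N t - b / m) * exp (m * t) * exp (- m * t))
    by (rewrite Rmult_assoc, Hinv; ring).
  rewrite Hg. reflexivity.
Qed.

(** * Barrier arguments *)

Lemma cont_from_pos_right f a x :
  cont_from f a -> a <= x -> 0 < f x -> exists d, 0 < d /\ forall u, 0 <= u < d -> 0 < f (x + u).
Proof.
  intros Hf Hx Hpos. destruct (Hf x Hx (f x) Hpos) as [d [Hd Hfd]].
  exists d. split; auto. intros u Hu.
  assert (Habs : Rabs (f (x + u) - f x) < f x) by (apply Hfd; rewrite ?Rabs_right; lra).
  apply Rabs_def2 in Habs. lra.
Qed.

Lemma cont_from_nonneg_left f a x :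
  cont_from f a -> a < x -> (forall s, a <= s < x -> 0 < f s) -> 0 <= f x.
Proof.
  intros Hf Hx Hpos. apply Rnot_lt_le. intros Hneg.
  destruct (Hf x ltac:(lra) (- f x) ltac:(lra)) as [d [Hd Hfd]].
  set (s := Rmax a (x - d / 2)).
  assert (Hs : a <= s < x) by (split; [apply Rmax_l|apply Rmax_lub_lt; lra]).
  assert (Habs : Rabs (f s - f x) < - f x).
  { apply Hfd; [lra|]. rewrite Rabs_left by lra. generalize (Rmax_r a (x - d / 2)). fold s. lra. }
  apply Rabs_def2 in Habs. specialize (Hpos s Hs). lra.
Qed.

Lemma derivable_pt_lim_nonpos_of_left_gt f t l d :
  derivable_pt_lim f t l -> 0 < d -> (forall s, t - d < s < t -> f t < f s) -> l <= 0.
Proof.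
  intros Hf Hd Hgt. apply Rnot_lt_le. intros Hl.
  destruct (Hf l Hl) as [del Hdel].
  set (k := Rmin (del / 2) (d / 2)).
  assert (Hk : 0 < k) by (apply Rmin_glb_lt; generalize (cond_pos del); lra).
  assert (Hk1 : k <= del / 2) by apply Rmin_l.
  assert (Hk2 : k <= d / 2) by apply Rmin_r.
  specialize (Hdel (- k) ltac:(lra) ltac:(rewrite Rabs_Ropp, Rabs_right; lra)).
  apply Rabs_def2 in Hdel.
  assert (Hq : (f (t + - k) - f t) / - k < 0).
  { apply Rdiv_pos_neg; [|lra]. specialize (Hgt (t + - k) ltac:(lra)). lra. }
  lra.
Qed.

Lemma common_delta {I} (l : list I) (Q : I -> R -> Prop) :
  (forall i, In i l -> exists d, 0 < d /\ forall u, 0 <= u < d -> Q i u) ->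
  exists d, 0 < d /\ forall i u, In i l -> 0 <= u < d -> Q i u.
Proof.
  induction l as [|i0 l IH]; intros H.
  - exists 1. split; [lra|]. intros i u [].
  - destruct IH as [d1 [Hd1 H1]]; [intros i Hi; apply H; right; auto|].
    destruct (H i0 (or_introl eq_refl)) as [d2 [Hd2 H2]].
    exists (Rmin d1 d2). split; [apply Rmin_glb_lt; auto|].
    intros i u [<-|Hi] Hu; generalize (Rmin_l d1 d2) (Rmin_r d1 d2); intros.
    + apply H2; lra.
    + apply H1; auto; lra.
Qed.

Lemma first_touch_positive {I} (l : list I) (h dh : I -> R -> R) :
  (forall i, In i l -> cont_from (h i) 0) ->
  (forall i t, In i l -> 0 < t -> derivable_pt_lim (h i) t (dh i t)) ->
  (forall i, In i l -> 0 < h i 0) ->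
  (forall i t, In i l -> 0 < t ->
     (forall j s, In j l -> 0 <= s <= t -> 0 <= h j s) -> h i t = 0 -> 0 < dh i t) ->
  forall i t, In i l -> 0 <= t -> 0 < h i t.
Proof.
  intros Hc Hd H0 Htouch i0 t0 Hi0 Ht0.
  apply Rnot_le_lt. intros Hneg.
  set (good := fun t => 0 <= t /\ forall j s, In j l -> 0 <= s <= t -> 0 < h j s).
  assert (Hgood_lt : forall t, good t -> t < t0).
  { intros t [Ht Hall]. apply Rnot_le_lt. intros Hle.
    specialize (Hall i0 t0 Hi0 ltac:(lra)). lra. }
  destruct (completeness good) as [T [HubT HlubT]].
  { exists t0. intros t Ht. left; auto. }
  { exists 0. split; [lra|]. intros j s Hj Hs. replace s with 0 by lra. auto. }
  assert (HT0 : 0 <= T) by (apply HubT; split; [lra|]; intros j s Hj Hs; replace s with 0 by lra; auto).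
  assert (Hbefore : forall j s, In j l -> 0 <= s < T -> 0 < h j s).
  { intros j s Hj Hs. apply NNPP. intros Hnot.
    assert (Hub : is_upper_bound good s).
    { intros t [Ht Hall]. apply Rnot_lt_le. intros Hst. apply Hnot, Hall; auto; lra. }
    specialize (HlubT s Hub). lra. }
  assert (HatT : forall j, In j l -> 0 <= h j T).
  { intros j Hj. destruct HT0 as [HTpos|HT0].
    - apply (cont_from_nonneg_left (h j) 0); auto.
    - rewrite <- HT0. left; auto. }
  destruct (classic (exists i, In i l /\ h i T = 0)) as [[i [Hi HhT]]|Hnone].
  - assert (HTpos : 0 < T).
    { destruct HT0 as [|HT0]; auto. rewrite <- HT0 in HhT. specialize (H0 i Hi). lra. }
    assert (Hdpos : 0 < dh i T).
    { apply Htouch; auto. intros j s Hj Hs.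
      destruct (Req_dec s T) as [->|Hne]; [apply HatT; auto|left; apply Hbefore; auto; lra]. }
    assert (Hdle : dh i T <= 0).
    { apply (derivable_pt_lim_nonpos_of_left_gt (h i) T _ T); auto.
      intros s Hs. rewrite HhT. apply Hbefore; auto; lra. }
    lra.
  - assert (HposT : forall j, In j l -> 0 < h j T).
    { intros j Hj. destruct (HatT j Hj) as [|Heq]; auto. exfalso. apply Hnone. eauto. }
    destruct (common_delta l (fun j u => 0 < h j (T + u))) as [d [Hdpos Hright]].
    { intros j Hj. apply (cont_from_pos_right (h j) 0); auto. }
    assert (Hgood : good (T + d / 2)).
    { split; [lra|]. intros j s Hj Hs. destruct (Rlt_or_le s T).
      - apply Hbefore; auto; lra.
      - replace s with (T + (s - T)) by ring. apply Hright; auto; lra. }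
    specialize (HubT _ Hgood). lra.
Qed.

Lemma abs_lt_barrier {I} (l : list I) (g w dg dw : I -> R -> R) :
  (forall i, In i l -> cont_from (g i) 0 /\ cont_from (w i) 0) ->
  (forall i t, In i l -> 0 < t ->
     derivable_pt_lim (g i) t (dg i t) /\ derivable_pt_lim (w i) t (dw i t)) ->
  (forall i, In i l -> Rabs (g i 0) < w i 0) ->
  (forall i t, In i l -> 0 < t ->
     (forall j s, In j l -> 0 <= s <= t -> Rabs (g j s) <= w j s) ->
     Rabs (g i t) = w i t -> g i t * dg i t < w i t * dw i t) ->
  forall i t, In i l -> 0 <= t -> Rabs (g i t) < w i t.
Proof.
  (* |g| < w is the conjunction of the one-sided barriers w - g > 0 and w + g > 0. *)
  intros Hc Hd H0 Htouch.
  set (sgn := fun b : bool => if b then 1 else -1).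
  assert (Hsgn : forall b, sgn b * sgn b = 1) by (intros []; simpl; ring).
  set (h := fun (p : bool * I) t => w (snd p) t - sgn (fst p) * g (snd p) t).
  set (dh := fun (p : bool * I) t => dw (snd p) t - sgn (fst p) * dg (snd p) t).
  set (lp := list_prod [true; false] l).
  assert (Hin : forall b i, In i l -> In (b, i) lp).
  { intros b i Hi. apply in_prod; auto. destruct b; simpl; auto. }
  assert (Habs : forall i t, In i l -> 0 <= h (true, i) t -> 0 <= h (false, i) t ->
            Rabs (g i t) <= w i t).
  { intros i t _. unfold h, sgn; simpl. intros. apply Rabs_le. lra. }
  assert (Hpos : forall p t, In p lp -> 0 <= t -> 0 < h p t).
  { apply (first_touch_positive lp h dh).
    - intros [b i] Hp. apply in_prod_iff in Hp as [_ Hi]. destruct (Hc i Hi).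
      apply cont_from_minus; auto using cont_from_scal.
    - intros [b i] t Hp Ht. apply in_prod_iff in Hp as [_ Hi]. destruct (Hd i t Hi Ht).
      apply dlim_minus; auto using dlim_scal.
    - intros [b i] Hp. apply in_prod_iff in Hp as [_ Hi]. specialize (H0 i Hi).
      apply Rabs_def2 in H0. unfold h, sgn; destruct b; simpl; lra.
    - intros [b i] t Hp Ht Hall Hz. apply in_prod_iff in Hp as [_ Hi]. simpl in Hz.
      assert (Hw : w i t = sgn b * g i t) by (unfold h in Hz; simpl in Hz; lra).
      assert (Hgw : g i t = sgn b * w i t) by (rewrite Hw, <- Rmult_assoc, Hsgn; ring).
      assert (Hw0 : 0 <= w i t).
      { apply Rle_trans with (Rabs (g i t)); [apply Rabs_pos|].
        apply Habs; auto; apply Hall; auto; lra. }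
      assert (Hlt : g i t * dg i t < w i t * dw i t).
      { apply Htouch; [exact Hi|exact Ht| |].
        - intros j s Hj Hs. apply Habs; auto; apply Hall; auto.
        - rewrite Hgw, Rabs_mult.
          replace (Rabs (sgn b)) with 1 by (destruct b; simpl; rewrite ?Rabs_R1, ?Rabs_m1; reflexivity).
          rewrite Rmult_1_l. apply Rabs_right; lra. }
      rewrite Hgw in Hlt. unfold dh; simpl.
      destruct b; simpl in *; nra. }
  intros i t Hi Ht. assert (Ht1 := Hpos (true, i) t (Hin true i Hi) Ht).
  assert (Ht2 := Hpos (false, i) t (Hin false i Hi) Ht).
  unfold h, sgn in Ht1, Ht2; simpl in Ht1, Ht2. apply Rabs_def1; lra.
Qed.

Lemma ge_of_inward (x dx : R -> R) (a : R) :
  cont_from x 0 -> (forall t, 0 < t -> derivable_pt_lim x t (dx t)) -> a <= x 0 ->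
  (forall t eta, 0 < t -> 0 < eta <= 1 -> x t = a - eta -> 0 < dx t) ->
  forall t, 0 <= t -> a <= x t.
Proof.
  intros Hc Hd H0 Hin t Ht. apply Rnot_lt_le. intros Hlt.
  set (eta := Rmin 1 ((a - x t) / 2)).
  assert (Heta : 0 < eta <= 1) by (split; [apply Rmin_glb_lt; lra|apply Rmin_l]).
  assert (Heta2 : eta <= (a - x t) / 2) by apply Rmin_r.
  assert (Hpos := first_touch_positive [tt] (fun _ s => x s - a + eta) (fun _ s => dx s - 0 + 0)).
  specialize (Hpos ltac:(intros; apply cont_from_plus; auto using cont_from_minus, cont_from_const)).
  specialize (Hpos ltac:(intros; apply dlim_plus; auto using dlim_minus, dlim_const)).
  specialize (Hpos ltac:(intros; lra)).
  specialize (Hpos ltac:(intros u s _ Hs _ Hz; simpl in Hz |- *; rewrite Rminus_0_r, Rplus_0_r;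
                         apply (Hin s eta); auto; lra)).
  specialize (Hpos tt t (or_introl eq_refl) Ht). simpl in Hpos. lra.
Qed.

Lemma le_of_inward (x dx : R -> R) (b : R) :
  cont_from x 0 -> (forall t, 0 < t -> derivable_pt_lim x t (dx t)) -> x 0 <= b ->
  (forall t eta, 0 < t -> 0 < eta <= 1 -> x t = b + eta -> dx t < 0) ->
  forall t, 0 <= t -> x t <= b.
Proof.
  intros Hc Hd H0 Hin t Ht.
  enough (- b <= 0 - x t) by lra.
  apply (ge_of_inward (fun s => 0 - x s) (fun s => 0 - dx s)); auto.
  - apply cont_from_minus; auto using cont_from_const.
  - intros s Hs. apply dlim_minus; auto using dlim_const.
  - lra.
  - intros s eta Hs Heta Hx. assert (dx s < 0) by (apply (Hin s eta); auto; lra). lra.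
Qed.

(** * Delay equations with a globally Lipschitz right-hand side *)

Fixpoint l1_dist (n : nat) (u v : nat -> R) : R :=
  match n with O => 0 | S k => l1_dist k u v + Rabs (u k - v k) end.

Lemma l1_dist_nonneg n u v : 0 <= l1_dist n u v.
Proof. induction n; simpl; [lra|]. generalize (Rabs_pos (u n - v n)). lra. Qed.

Lemma l1_dist_ge_coord n u v i : (i < n)%nat -> Rabs (u i - v i) <= l1_dist n u v.
Proof.
  induction n; intros Hi; [lia|]. simpl. generalize (l1_dist_nonneg n u v) (Rabs_pos (u n - v n)).
  destruct (Nat.eq_dec i n) as [->|Hne]; [lra|].
  assert (Rabs (u i - v i) <= l1_dist n u v) by (apply IHn; lia). lra.
Qed.

Lemma l1_dist_le n u v c :
  (forall j, (j < n)%nat -> Rabs (u j - v j) <= c) -> l1_dist n u v <= INR n * c.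
Proof.
  induction n; intros H; [simpl; lra|]. cbn [l1_dist]. rewrite S_INR.
  assert (l1_dist n u v <= INR n * c) by (apply IHn; intros; apply H; lia).
  assert (Rabs (u n - v n) <= c) by (apply H; lia). lra.
Qed.

Lemma continuous_of_lipschitz (f : R -> R) (x K : R) :
  0 <= K -> (forall y, Rabs (f y - f x) <= K * Rabs (y - x)) -> continuous f x.
Proof.
  intros HK H. apply continuity_pt_filterlim.
  intros eps Heps. exists (eps / (K + 1)). split; [apply Rdiv_lt_0_compat; lra|].
  intros y [_ Hy]. simpl in Hy. unfold Rdist in Hy.
  eapply Rle_lt_trans; [apply H|].
  apply Rle_lt_trans with ((K + 1) * Rabs (y - x)); [generalize (Rabs_pos (y - x)); nra|].
  apply Rmult_lt_compat_l with (r := K + 1) in Hy; [|lra].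
  replace ((K + 1) * (eps / (K + 1))) with eps in Hy by (field; lra). lra.
Qed.

Lemma continuous_Rabs_minus (f g : R -> R) x :
  continuous f x -> continuous g x -> continuous (fun s => Rabs (f s - g s)) x.
Proof.
  intros Hf Hg. apply continuity_pt_filterlim.
  apply (continuity_pt_comp (minus_fct f g) Rabs).
  - apply continuity_pt_minus; apply continuity_pt_filterlim; auto.
  - apply Rcontinuity_abs.
Qed.

Lemma ex_RInt_of_continuous (f : R -> R) (a b : R) : (forall x, continuous f x) -> ex_RInt f a b.
Proof. intros H. apply (ex_RInt_continuous (V := R_CompleteNormedModule)). auto. Qed.

Lemma RInt_minus_origin (g : R -> R) (a b : R) :
  (forall x, continuous g x) -> RInt g 0 a - RInt g 0 b = RInt g b a.
Proof.
  intros Hc.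
  assert (H := RInt_Chasles g 0 b a (ex_RInt_of_continuous g 0 b Hc) (ex_RInt_of_continuous g b a Hc)).
  change plus with Rplus in H. rewrite <- H. ring.
Qed.

Lemma RInt_minus_R (f g : R -> R) a b :
  (forall x, continuous f x) -> (forall x, continuous g x) ->
  RInt (fun x => f x - g x) a b = RInt f a b - RInt g a b.
Proof. intros. apply (RInt_minus f g a b); apply ex_RInt_of_continuous; auto. Qed.

Lemma abs_RInt_le_const_R (g : R -> R) (a b M : R) :
  (forall x, continuous g x) -> (forall x, Rmin a b <= x <= Rmax a b -> Rabs (g x) <= M) ->
  Rabs (RInt g a b) <= M * Rabs (b - a).
Proof.
  intros Hc HM. destruct (Rle_or_lt a b) as [Hab|Hab].
  - rewrite (Rabs_right (b - a)), (Rmult_comm M) by lra.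
    apply abs_RInt_le_const; [lra|apply ex_RInt_of_continuous; auto|].
    intros t Ht; apply HM. rewrite Rmin_left, Rmax_right by lra. auto.
  - rewrite <- opp_RInt_swap by (apply ex_RInt_of_continuous; auto).
    change opp with Ropp. rewrite Rabs_Ropp, (Rabs_left (b - a)) by lra.
    replace (M * - (b - a)) with ((a - b) * M) by ring.
    apply abs_RInt_le_const; [lra|apply ex_RInt_of_continuous; auto|].
    intros t Ht; apply HM. rewrite Rmin_right, Rmax_left by lra. auto.
Qed.

Lemma RInt_monomial (c : R) (m : nat) (T : R) :
  RInt (fun s => c * s ^ m) 0 T = c * T ^ (S m) / INR (S m).
Proof.
  assert (HS : INR (S m) <> 0) by (apply not_0_INR; lia).
  apply is_RInt_unique.
  replace (c * T ^ S m / INR (S m)) with (minus (c * T ^ S m / INR (S m)) (c * 0 ^ S m / INR (S m)))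
    by (simpl; change minus with Rminus; field; auto).
  apply (is_RInt_derive (fun s => c * s ^ S m / INR (S m))).
  - intros x _. auto_derive; auto. simpl. field. auto.
  - intros x _. apply (ex_derive_continuous (K := R_AbsRing) (V := R_NormedModule)). auto_derive. auto.
Qed.

Lemma Rmax0_lipschitz (t s : R) : Rabs (Rmax t 0 - Rmax s 0) <= Rabs (t - s).
Proof. unfold Rmax. destruct (Rle_dec t 0), (Rle_dec s 0); unfold Rabs; repeat destruct Rcase_abs; lra. Qed.

Definition exp_partial (m : nat) (r : R) : R := sum_f_R0 (fun i => / INR (Factorial.fact i) * r ^ i) m.

Lemma exp_partial_cv r : Un_cv (fun m => exp_partial m r) (exp r).
Proof.
  intros eps Heps. destruct (proj2_sig (exist_exp r) eps Heps) as [N HN].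
  exists N. intros m Hm. apply HN. lia.
Qed.

Lemma exp_partial_S m r :
  exp_partial (S m) r = exp_partial m r + / INR (Factorial.fact (S m)) * r ^ S m.
Proof. apply tech5. Qed.

Lemma exp_partial_le r m p : 0 <= r -> (m <= p)%nat -> exp_partial m r <= exp_partial p r.
Proof.
  intros Hr Hmp. induction Hmp; [lra|]. rewrite exp_partial_S.
  assert (0 <= / INR (Factorial.fact (S m0)) * r ^ S m0); [|lra].
  apply Rmult_le_pos; [left; apply Rinv_0_lt_compat, lt_0_INR, Factorial.lt_O_fact|apply pow_le; auto].
Qed.

Lemma exp_partial_le_exp r m : 0 <= r -> exp_partial m r <= exp r.
Proof.
  intros Hr. apply Rnot_lt_le. intros H.
  destruct (exp_partial_cv r (exp_partial m r - exp r) ltac:(lra)) as [N HN].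
  specialize (HN (Nat.max N m) ltac:(lia)). unfold R_dist in HN.
  assert (exp_partial m r <= exp_partial (Nat.max N m) r) by (apply exp_partial_le; auto; lia).
  apply Rabs_def2 in HN. lra.
Qed.

Section DelayedPicard.

Variables (n : nat) (tau : R) (phi : nat -> R) (F : nat -> (nat -> R) -> (nat -> R) -> R) (L B : R).
Hypotheses (n_pos : (0 < n)%nat) (tau_nonneg : 0 <= tau) (L_pos : 0 < L) (B_nonneg : 0 <= B).
Hypothesis F_lipschitz : forall i u v u' v', (i < n)%nat ->
  Rabs (F i u v - F i u' v') <= L * (l1_dist n u u' + l1_dist n v v').
Hypothesis F_bounded : forall i u v, (i < n)%nat -> Rabs (F i u v) <= B.

Definition rate_along (X : R -> nat -> R) (i : nat) (s : R) : R := F i (X s) (X (s - tau)).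

Fixpoint picard (k : nat) : R -> nat -> R :=
  match k with
  | O => fun _ i => phi i
  | S k => fun t i => phi i + RInt (rate_along (picard k) i) 0 (Rmax t 0)
  end.

Definition B_lipschitz (X : R -> nat -> R) : Prop :=
  forall j t s, (j < n)%nat -> Rabs (X t j - X s j) <= B * Rabs (t - s).

Lemma INR_n_pos : 0 < INR n.
Proof. apply lt_0_INR. exact n_pos. Qed.

Lemma rate_along_close (X Y : R -> nat -> R) (i : nat) (s e : R) : (i < n)%nat ->
  (forall j, (j < n)%nat -> Rabs (X s j - Y s j) <= e) ->
  (forall j, (j < n)%nat -> Rabs (X (s - tau) j - Y (s - tau) j) <= e) ->
  Rabs (rate_along X i s - rate_along Y i s) <= 2 * INR n * L * e.
Proof.
  intros Hi He Hed. eapply Rle_trans; [apply F_lipschitz; auto|].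
  assert (l1_dist n (X s) (Y s) <= INR n * e) by (apply l1_dist_le; auto).
  assert (l1_dist n (X (s - tau)) (Y (s - tau)) <= INR n * e) by (apply l1_dist_le; auto).
  replace (2 * INR n * L * e) with (L * (INR n * e + INR n * e)) by ring.
  apply Rmult_le_compat_l; lra.
Qed.

Lemma rate_along_lipschitz X i : (i < n)%nat -> B_lipschitz X ->
  forall y x, Rabs (rate_along X i y - rate_along X i x) <= 2 * INR n * B * L * Rabs (y - x).
Proof.
  intros Hi HX y x. eapply Rle_trans; [apply F_lipschitz; auto|].
  assert (l1_dist n (X y) (X x) <= INR n * (B * Rabs (y - x))) by (apply l1_dist_le; auto).
  assert (l1_dist n (X (y - tau)) (X (x - tau)) <= INR n * (B * Rabs (y - x))).
  { apply l1_dist_le. intros j Hj. replace (y - x) with ((y - tau) - (x - tau)) by ring. auto. }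
  replace (2 * INR n * B * L * Rabs (y - x))
    with (L * (INR n * (B * Rabs (y - x)) + INR n * (B * Rabs (y - x)))) by ring.
  apply Rmult_le_compat_l; lra.
Qed.

Lemma rate_along_continuous X i : (i < n)%nat -> B_lipschitz X -> forall x, continuous (rate_along X i) x.
Proof.
  intros Hi HX x. apply continuous_of_lipschitz with (2 * INR n * B * L).
  - generalize INR_n_pos. intros. repeat apply Rmult_le_pos; lra.
  - intros y. apply rate_along_lipschitz; auto.
Qed.

Lemma picard_history k t i : t <= 0 -> picard k t i = phi i.
Proof.
  intros Ht. destruct k; simpl; auto.
  rewrite Rmax_right by lra. rewrite RInt_point. change zero with 0. ring.
Qed.

Lemma picard_B_lipschitz k : B_lipschitz (picard k).
Proof.
  induction k; intros j t s Hj; simpl.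
  - rewrite Rminus_diag, Rabs_R0. apply Rmult_le_pos; auto; apply Rabs_pos.
  - replace (phi j + RInt (rate_along (picard k) j) 0 (Rmax t 0) -
             (phi j + RInt (rate_along (picard k) j) 0 (Rmax s 0)))
      with (RInt (rate_along (picard k) j) 0 (Rmax t 0) - RInt (rate_along (picard k) j) 0 (Rmax s 0))
      by ring.
    rewrite RInt_minus_origin by (apply rate_along_continuous; auto).
    eapply Rle_trans.
    + apply abs_RInt_le_const_R; [apply rate_along_continuous; auto|]. intros; apply F_bounded; auto.
    + apply Rmult_le_compat_l; auto. apply Rmax0_lipschitz.
Qed.

Lemma rate_along_picard_continuous k i x : (i < n)%nat -> continuous (rate_along (picard k) i) x.
Proof. intros Hi. apply rate_along_continuous; auto using picard_B_lipschitz. Qed.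

Let K := 2 * INR n * L.

Lemma K_pos : 0 < K.
Proof. unfold K. generalize INR_n_pos. nra. Qed.

Definition picard_gap (k : nat) (r : R) : R := B / K * (/ INR (Factorial.fact (S k)) * (K * r) ^ S k).

Lemma picard_gap_mono k r r' : 0 <= r <= r' -> picard_gap k r <= picard_gap k r'.
Proof.
  intros Hr. unfold picard_gap. generalize K_pos. intros HK.
  apply Rmult_le_compat_l; [apply Rdiv_le_0_compat; lra|].
  apply Rmult_le_compat_l; [left; apply Rinv_0_lt_compat, lt_0_INR, Factorial.lt_O_fact|].
  apply pow_incr. nra.
Qed.

Lemma picard_increment k t i : (i < n)%nat ->
  Rabs (picard (S k) t i - picard k t i) <= picard_gap k (Rmax t 0).
Proof.
  assert (HK := K_pos). revert t i.
  induction k as [|k IH]; intros t i Hi.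
  - change (picard 1 t i) with (phi i + RInt (rate_along (picard 0) i) 0 (Rmax t 0)).
    change (picard 0 t i) with (phi i). rewrite Rplus_minus_l.
    eapply Rle_trans.
    + apply abs_RInt_le_const_R; [intros; apply rate_along_picard_continuous; auto|].
      intros; apply F_bounded; auto.
    + unfold picard_gap. rewrite Rminus_0_r, (Rabs_right (Rmax t 0)) by (apply Rle_ge, Rmax_r).
      right. simpl. field. lra.
  - set (T := Rmax t 0).
    assert (HT : 0 <= T) by apply Rmax_r.
    set (C := 2 * INR n * L * (B / K * / INR (Factorial.fact (S k)) * K ^ S k)).
    assert (Hgap : forall s, 2 * INR n * L * picard_gap k s = C * s ^ S k).
    { intros s. unfold C, picard_gap. rewrite Rpow_mult_distr. ring. }
    change (picard (S (S k)) t i - picard (S k) t i) with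
      (phi i + RInt (rate_along (picard (S k)) i) 0 T - (phi i + RInt (rate_along (picard k) i) 0 T)).
    replace (phi i + RInt (rate_along (picard (S k)) i) 0 T - (phi i + RInt (rate_along (picard k) i) 0 T))
      with (RInt (rate_along (picard (S k)) i) 0 T - RInt (rate_along (picard k) i) 0 T) by ring.
    assert (Hc1 := rate_along_picard_continuous (S k) i).
    assert (Hc0 := rate_along_picard_continuous k i).
    rewrite <- RInt_minus_R by auto.
    eapply Rle_trans.
    { apply abs_RInt_le; [lra|]. apply ex_RInt_of_continuous. intros x.
      apply (continuous_minus (V := R_NormedModule)); auto. }
    eapply Rle_trans.
    { apply RInt_le with (g := fun s => C * s ^ S k); [lra| | |].
      - apply ex_RInt_of_continuous. intros x. apply continuous_Rabs_minus; auto.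
      - apply ex_RInt_of_continuous. intros x.
        apply (ex_derive_continuous (K := R_AbsRing) (V := R_NormedModule)). auto_derive. auto.
      - intros s Hs. rewrite <- Hgap. apply rate_along_close; auto.
        + intros j Hj. eapply Rle_trans; [apply IH; auto|].
          apply picard_gap_mono. rewrite Rmax_left; lra.
        + intros j Hj. eapply Rle_trans; [apply IH; auto|].
          apply picard_gap_mono. split; [apply Rmax_r|apply Rmax_lub; lra]. }
    rewrite RInt_monomial. right. unfold C, picard_gap.
    change (Factorial.fact (S (S k))) with (S (S k) * Factorial.fact (S k))%nat.
    rewrite mult_INR, Rpow_mult_distr. unfold K. simpl pow. field.
    split; [apply not_0_INR; generalize (Factorial.lt_O_fact (S k)); lia|].
    split; [apply not_0_INR; lia|]. generalize INR_n_pos; nra.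
Qed.

Definition picard_tail (k : nat) (T : R) : R := B / K * (exp (K * T) - exp_partial k (K * T)).

Lemma picard_tail_nonneg k T : 0 <= T -> 0 <= picard_tail k T.
Proof.
  intros HT. assert (HK := K_pos). unfold picard_tail.
  apply Rmult_le_pos; [apply Rdiv_le_0_compat; lra|].
  generalize (exp_partial_le_exp (K * T) k ltac:(nra)). lra.
Qed.

Lemma picard_tail_le k m T : 0 <= T -> (k <= m)%nat -> picard_tail m T <= picard_tail k T.
Proof.
  intros HT Hkm. assert (HK := K_pos). unfold picard_tail.
  apply Rmult_le_compat_l; [apply Rdiv_le_0_compat; lra|].
  generalize (exp_partial_le (K * T) k m ltac:(nra) Hkm). lra.
Qed.

Lemma picard_tail_small T eta : 0 < eta -> exists N, picard_tail N T < eta.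
Proof.
  intros Heta. assert (HK := K_pos).
  destruct (exp_partial_cv (K * T) (eta / (B / K + 1))) as [N HN].
  { apply Rdiv_lt_0_compat; [lra|]. assert (0 <= B / K) by (apply Rdiv_le_0_compat; lra). lra. }
  exists N. specialize (HN N (le_n N)). unfold R_dist in HN. rewrite Rabs_minus_sym in HN.
  unfold picard_tail. assert (HBK : 0 <= B / K) by (apply Rdiv_le_0_compat; lra).
  apply Rle_lt_trans with ((B / K + 1) * Rabs (exp (K * T) - exp_partial N (K * T))).
  - generalize (Rle_abs (exp (K * T) - exp_partial N (K * T)))
      (Rabs_pos (exp (K * T) - exp_partial N (K * T))). nra.
  - apply Rmult_lt_compat_l with (r := B / K + 1) in HN; [|lra].
    replace ((B / K + 1) * (eta / (B / K + 1))) with eta in HN by (field; lra). lra.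
Qed.

Lemma picard_cauchy k m t T i : (k <= m)%nat -> t <= T -> 0 <= T -> (i < n)%nat ->
  Rabs (picard m t i - picard k t i) <= picard_tail k T - picard_tail m T.
Proof.
  intros Hkm Ht HT Hi. assert (HK := K_pos). induction Hkm as [|m Hkm IH].
  - rewrite !Rminus_diag, Rabs_R0. lra.
  - replace (picard (S m) t i - picard k t i) with
      ((picard (S m) t i - picard m t i) + (picard m t i - picard k t i)) by ring.
    eapply Rle_trans; [apply Rabs_triang|].
    assert (Hgap := picard_increment m t i Hi).
    assert (Hmono : picard_gap m (Rmax t 0) <= picard_gap m T).
    { apply picard_gap_mono. split; [apply Rmax_r|apply Rmax_lub; lra]. }
    assert (Htail : picard_tail m T - picard_tail (S m) T = picard_gap m T).
    { unfold picard_tail, picard_gap. rewrite exp_partial_S. ring. }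
    lra.
Qed.

Definition picard_limit (t : R) (i : nat) : R := real (Lim_seq (fun k => picard k t i)).

Lemma picard_limit_correct t i : (i < n)%nat -> is_lim_seq (fun k => picard k t i) (picard_limit t i).
Proof.
  intros Hi. apply Lim_seq_correct', ex_lim_seq_cauchy_corr. intros eps.
  set (T := Rmax t 0). assert (HT : 0 <= T) by apply Rmax_r. assert (HtT : t <= T) by apply Rmax_l.
  destruct (picard_tail_small T (eps / 2)) as [N HN]; [generalize (cond_pos eps); lra|].
  exists N. intros p q Hp Hq.
  assert (H1 := picard_cauchy N p t T i Hp HtT HT Hi).
  assert (H2 := picard_cauchy N q t T i Hq HtT HT Hi).
  assert (H3 := picard_tail_nonneg p T HT). assert (H4 := picard_tail_nonneg q T HT).
  replace (picard p t i - picard q t i) with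
    ((picard p t i - picard N t i) - (picard q t i - picard N t i)) by ring.
  eapply Rle_lt_trans; [apply Rabs_triang|]. rewrite Rabs_Ropp. lra.
Qed.

Lemma picard_limit_error k t T i : t <= T -> 0 <= T -> (i < n)%nat ->
  Rabs (picard_limit t i - picard k t i) <= picard_tail k T.
Proof.
  intros Ht HT Hi. apply Rle_plus_epsilon. intros eta Heta.
  assert (Hl := picard_limit_correct t i Hi). apply is_lim_seq_Reals in Hl.
  destruct (Hl eta Heta) as [N HN].
  specialize (HN (Nat.max N k) ltac:(lia)). unfold R_dist in HN.
  assert (H1 := picard_cauchy k (Nat.max N k) t T i ltac:(lia) Ht HT Hi).
  assert (H2 := picard_tail_nonneg (Nat.max N k) T HT).
  replace (picard_limit t i - picard k t i) with
    ((picard (Nat.max N k) t i - picard k t i) - (picard (Nat.max N k) t i - picard_limit t i)) by ring.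
  eapply Rle_trans; [apply Rabs_triang|]. rewrite Rabs_Ropp. lra.
Qed.

Lemma picard_limit_history t i : t <= 0 -> picard_limit t i = phi i.
Proof.
  intros Ht. unfold picard_limit. rewrite (Lim_seq_ext _ (fun _ => phi i)).
  - rewrite Lim_seq_const. reflexivity.
  - intros k. apply picard_history. exact Ht.
Qed.

Lemma picard_limit_B_lipschitz : B_lipschitz picard_limit.
Proof.
  intros j t s Hj. apply Rle_plus_epsilon. intros eta Heta.
  assert (Ht := picard_limit_correct t j Hj). assert (Hs := picard_limit_correct s j Hj).
  apply is_lim_seq_Reals in Ht, Hs.
  destruct (Ht (eta / 2) ltac:(lra)) as [N1 H1]. destruct (Hs (eta / 2) ltac:(lra)) as [N2 H2].
  set (k := Nat.max N1 N2).
  specialize (H1 k ltac:(unfold k; lia)). specialize (H2 k ltac:(unfold k; lia)). unfold R_dist in H1, H2.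
  assert (H3 := picard_B_lipschitz k j t s Hj).
  replace (picard_limit t j - picard_limit s j) with
    ((picard k t j - picard k s j) - (picard k t j - picard_limit t j)
     + (picard k s j - picard_limit s j)) by ring.
  eapply Rle_trans; [apply Rabs_triang|].
  eapply Rle_trans; [apply Rplus_le_compat_r, Rabs_triang|]. rewrite Rabs_Ropp. lra.
Qed.

Lemma picard_limit_integral t i : 0 <= t -> (i < n)%nat ->
  picard_limit t i = phi i + RInt (rate_along picard_limit i) 0 t.
Proof.
  intros Ht Hi. assert (HK := K_pos).
  assert (Hcl := rate_along_continuous picard_limit i Hi picard_limit_B_lipschitz).
  assert (Hbound : forall k, Rabs (picard_limit t i - (phi i + RInt (rate_along picard_limit i) 0 t))
                             <= (1 + K * t) * picard_tail k t).
  { intros k. assert (Hck := rate_along_picard_continuous k i).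
    assert (H1 := picard_limit_error (S k) t t i (Rle_refl t) Ht Hi).
    assert (H1' := picard_tail_le k (S k) t Ht ltac:(lia)).
    assert (H2 : Rabs (RInt (rate_along (picard k) i) 0 t - RInt (rate_along picard_limit i) 0 t)
                 <= K * picard_tail k t * Rabs (t - 0)).
    { rewrite <- RInt_minus_R by auto.
      apply abs_RInt_le_const_R.
      - intros x. apply (continuous_minus (V := R_NormedModule)); auto.
      - intros x Hx. rewrite Rmin_left, Rmax_right in Hx by lra. rewrite Rabs_minus_sym.
        unfold K. apply rate_along_close; auto; intros j Hj; apply picard_limit_error; auto; lra. }
    rewrite Rminus_0_r, (Rabs_right t) in H2 by lra.
    change (picard (S k) t i) with (phi i + RInt (rate_along (picard k) i) 0 (Rmax t 0)) in H1.
    rewrite Rmax_left in H1 by lra.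
    replace (picard_limit t i - (phi i + RInt (rate_along picard_limit i) 0 t)) with
      ((picard_limit t i - (phi i + RInt (rate_along (picard k) i) 0 t)) +
       (RInt (rate_along (picard k) i) 0 t - RInt (rate_along picard_limit i) 0 t)) by ring.
    eapply Rle_trans; [apply Rabs_triang|]. nra. }
  apply Rminus_diag_uniq, Rabs_eq_0, Rle_antisym; [|apply Rabs_pos].
  apply Rle_plus_epsilon. intros eta Heta. rewrite Rplus_0_l.
  destruct (picard_tail_small t (eta / (1 + K * t))) as [N HN]; [apply Rdiv_lt_0_compat; nra|].
  eapply Rle_trans; [apply (Hbound N)|].
  apply Rmult_lt_compat_l with (r := 1 + K * t) in HN; [|nra].
  replace ((1 + K * t) * (eta / (1 + K * t))) with eta in HN by (field; nra). lra.
Qed.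

Lemma picard_limit_derivative i t : (i < n)%nat -> 0 < t ->
  derivable_pt_lim (fun s => picard_limit s i) t (rate_along picard_limit i t).
Proof.
  intros Hi Ht. set (g := rate_along picard_limit i).
  assert (Hcl := rate_along_continuous picard_limit i Hi picard_limit_B_lipschitz).
  assert (Hd : is_derive (fun b => phi i + RInt g 0 b) t (g t)).
  { apply is_derive_Reals. replace (g t) with (0 + g t) by ring.
    apply (dlim_plus (fun _ => phi i)); [apply dlim_const|]. apply is_derive_Reals.
    apply (is_derive_RInt g (fun b => RInt g 0 b) 0 t); auto.
    exists (mkposreal 1 Rlt_0_1). intros y _.
    apply (RInt_correct (V := R_CompleteNormedModule)), ex_RInt_of_continuous; auto. }
  apply is_derive_Reals. apply (is_derive_ext_loc (fun b => phi i + RInt g 0 b)); auto.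
  assert (Ht2 : 0 < t / 2) by lra.
  exists (mkposreal (t / 2) Ht2). intros y Hy.
  change (Rabs (y - t) < t / 2) in Hy. apply Rabs_def2 in Hy.
  symmetry. apply picard_limit_integral; auto; lra.
Qed.

End DelayedPicard.

Theorem delay_ode_exists n tau phi F L B :
  (0 < n)%nat -> 0 <= tau -> 0 < L -> 0 <= B ->
  (forall i u v u' v', (i < n)%nat ->
     Rabs (F i u v - F i u' v') <= L * (l1_dist n u u' + l1_dist n v v')) ->
  (forall i u v, (i < n)%nat -> Rabs (F i u v) <= B) ->
  exists X : R -> nat -> R,
    (forall t i, t <= 0 -> X t i = phi i) /\
    (forall j t s, (j < n)%nat -> Rabs (X t j - X s j) <= B * Rabs (t - s)) /\
    (forall i t, (i < n)%nat -> 0 < t ->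
       derivable_pt_lim (fun s => X s i) t (F i (X t) (X (t - tau)))).
Proof.
  intros Hn Htau HL HB HF HFB. exists (picard_limit tau phi F).
  split; [|split].
  - intros t i Ht. apply picard_limit_history. exact Ht.
  - apply (picard_limit_B_lipschitz n tau phi F L B); auto.
  - intros i t Hi Ht. apply (picard_limit_derivative n tau phi F L B); auto.
Qed.

(** * The host-vector model near its disease-free equilibrium *)

Lemma touch_decay mu lam w y r :
  Rabs y = w -> Rabs r < (mu - lam) * w -> y * (- mu * y + r) < w * (- lam * w).
Proof.
  intros Hy Hr.
  assert (Hyy : y * y = w * w) by (rewrite <- Hy, <- Rabs_mult, Rabs_right; [ring|nra]).
  assert (Hyr : y * r <= w * Rabs r) by (rewrite <- Hy, <- Rabs_mult; apply Rle_abs).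
  assert (Hw : 0 <= w) by (rewrite <- Hy; apply Rabs_pos).
  destruct Hw as [Hw|Hw].
  - assert (w * Rabs r < w * ((mu - lam) * w)) by (apply Rmult_lt_compat_l; auto).
    replace (y * (- mu * y + r)) with (- mu * (y * y) + y * r) by ring. rewrite Hyy. lra.
  - subst w. generalize (Rabs_pos r). nra.
Qed.

Lemma Rabs_ratio_mult_le a b n X Y D :
  Rabs a <= X -> Rabs b <= Y -> 0 < D -> D <= n -> Rabs (a / n * b) <= X * Y / D.
Proof.
  intros Ha Hb HD Hn. unfold Rdiv. rewrite !Rabs_mult, Rabs_inv, (Rabs_right n) by lra.
  assert (0 <= X) by (generalize (Rabs_pos a); lra).
  assert (0 <= Y) by (generalize (Rabs_pos b); lra).
  assert (/ n <= / D) by (apply Rinv_le_contravar; lra).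
  assert (0 < / n) by (apply Rinv_0_lt_compat; lra).
  apply Rle_trans with (X * / n * Y).
  - apply Rmult_le_compat; try apply Rmult_le_pos; try apply Rabs_pos; try lra.
    apply Rmult_le_compat_r; lra.
  - replace (X * Y * / D) with (X * / D * Y) by ring.
    apply Rmult_le_compat_r; auto. apply Rmult_le_compat_l; auto.
Qed.

Lemma continuity_pt_of_ex_derive (f : R -> R) x : ex_derive f x -> continuity_pt f x.
Proof.
  intros Hd. apply continuity_pt_filterlim.
  exact (ex_derive_continuous (K := R_AbsRing) (V := R_NormedModule) f x Hd).
Qed.

Lemma eventually_pos_at_0 (f : R -> R) :
  continuity_pt f 0 -> 0 < f 0 -> exists s0, 0 < s0 /\ forall s, 0 <= s < s0 -> 0 < f s.
Proof.
  intros Hc Hf. destruct (Hc (f 0) Hf) as [s0 [Hs0 Hclose]]. exists s0. split; [lra|].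
  intros s Hs. destruct (Req_dec s 0) as [->|Hne]; auto.
  assert (Habs : Rabs (f s - f 0) < f 0).
  { apply (Hclose s). split; [split; [exact I|auto]|]. simpl. unfold R_dist.
    rewrite Rminus_0_r, Rabs_right; lra. }
  apply Rabs_def2 in Habs. lra.
Qed.

Section HostVectorModel.

Variables bh bv muh muv Cvh Chv tau : R.
Hypotheses (bh_pos : 0 < bh) (bv_pos : 0 < bv) (muh_pos : 0 < muh) (muv_pos : 0 < muv)
  (Cvh_pos : 0 < Cvh) (Chv_pos : 0 < Chv) (tau_nonneg : 0 <= tau).

Local Notation Sh0 := (bh / muh).
Local Notation Sv0 := (bv / muv).
Local Notation solution := (is_solution bh bv muh muv Cvh Chv tau).

Lemma Sh0_pos : 0 < Sh0.
Proof. apply Rdiv_lt_0_compat; auto. Qed.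

Lemma Sv0_pos : 0 < Sv0.
Proof. apply Rdiv_lt_0_compat; auto. Qed.

Lemma solution_cont_from p1 p2 p3 p4 x1 x2 x3 x4 :
  solution p1 p2 p3 p4 x1 x2 x3 x4 ->
  cont_from x1 0 /\ cont_from x2 0 /\ cont_from x3 0 /\ cont_from x4 0.
Proof. intros (H1 & H2 & H3 & H4 & _). repeat split; eapply cont_from_le; eauto; lra. Qed.

Lemma solution_vector_total p1 p2 p3 p4 x1 x2 x3 x4 :
  solution p1 p2 p3 p4 x1 x2 x3 x4 -> forall t, 0 <= t ->
  x3 t + x4 t = Sv0 + (x3 0 + x4 0 - Sv0) * exp (- muv * t).
Proof.
  intros Hs. destruct (solution_cont_from _ _ _ _ _ _ _ _ Hs) as (_ & _ & C3 & C4).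
  destruct Hs as (_ & _ & _ & _ & _ & Hd).
  apply (linear_relaxation bv muv (fun t => x3 t + x4 t)); auto.
  - apply cont_from_plus; auto.
  - intros t Ht. destruct (Hd t Ht) as (_ & _ & D3 & D4).
    eapply dlim_eq; [apply dlim_plus; [apply D3|apply D4]|]. ring.
Qed.

Lemma vector_total_initial d p1 p2 p3 p4 x1 x2 x3 x4 :
  phi_near tau p1 p2 p3 p4 Sh0 0 Sv0 0 d -> solution p1 p2 p3 p4 x1 x2 x3 x4 ->
  forall s, - tau <= s <= 0 -> Rabs (x3 s + x4 s - Sv0) <= 2 * d.
Proof.
  intros Hnear Hs s Hs0. destruct Hs as (_ & _ & _ & _ & Hx & _).
  destruct (Hx s Hs0) as (_ & _ & -> & ->). destruct (Hnear s Hs0) as (_ & _ & Q3 & Q4).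
  rewrite Rminus_0_r in Q4. replace (p3 s + p4 s - Sv0) with ((p3 s - Sv0) + p4 s) by ring.
  eapply Rle_trans; [apply Rabs_triang|]. lra.
Qed.

Lemma vector_total_decay d p1 p2 p3 p4 x1 x2 x3 x4 :
  phi_near tau p1 p2 p3 p4 Sh0 0 Sv0 0 d -> solution p1 p2 p3 p4 x1 x2 x3 x4 ->
  forall t, 0 <= t -> Rabs (x3 t + x4 t - Sv0) <= 2 * d * exp (- muv * t).
Proof.
  intros Hnear Hs t Ht.
  rewrite (solution_vector_total _ _ _ _ _ _ _ _ Hs t Ht).
  replace (Sv0 + (x3 0 + x4 0 - Sv0) * exp (- muv * t) - Sv0)
    with ((x3 0 + x4 0 - Sv0) * exp (- muv * t)) by ring.
  rewrite Rabs_mult, (Rabs_right (exp _)) by (left; apply exp_pos).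
  apply Rmult_le_compat_r; [left; apply exp_pos|].
  apply (vector_total_initial d p1 p2 p3 p4 x1 x2); auto; lra.
Qed.

Lemma vector_total_near d p1 p2 p3 p4 x1 x2 x3 x4 :
  phi_near tau p1 p2 p3 p4 Sh0 0 Sv0 0 d -> solution p1 p2 p3 p4 x1 x2 x3 x4 ->
  forall s, - tau <= s -> Rabs (x3 s + x4 s - Sv0) <= 2 * d.
Proof.
  intros Hnear Hs s Hs0. destruct (Rle_or_lt s 0) as [Hle|Hlt].
  - apply (vector_total_initial d p1 p2 p3 p4 x1 x2); auto; lra.
  - eapply Rle_trans; [apply (vector_total_decay d p1 p2 p3 p4 x1 x2); auto; lra|].
    assert (Hd : 0 <= 2 * d).
    { assert (H0 := vector_total_initial d p1 p2 p3 p4 x1 x2 x3 x4 Hnear Hs 0 ltac:(lra)).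
      generalize (Rabs_pos (x3 0 + x4 0 - Sv0)). lra. }
    assert (exp (- muv * s) <= 1) by (apply exp_le_1; nra). nra.
Qed.

Lemma stability_history lam c m d p1 p2 p3 p4 x1 x2 x3 x4 t :
  0 < lam -> 0 < c -> 0 < m -> d <= m -> c * d <= m ->
  phi_near tau p1 p2 p3 p4 Sh0 0 Sv0 0 d -> solution p1 p2 p3 p4 x1 x2 x3 x4 ->
  (forall s, 0 <= s <= t -> Rabs (x1 s - Sh0) <= m * exp (- lam * s) /\
     Rabs (x2 s) <= m * exp (- lam * s) /\ c * Rabs (x4 s) <= m * exp (- lam * s)) ->
  forall s, - tau <= s <= t ->
    Rabs (x1 s - Sh0) <= m * exp (- lam * s) /\ Rabs (x2 s) <= m * exp (- lam * s) /\
    c * Rabs (x4 s) <= m * exp (- lam * s) /\ Rabs (x1 s - Sh0) <= m.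
Proof.
  intros Hlam Hc Hm Hdm Hcd Hnear Hsol Hnow s Hs. destruct (Rle_or_lt 0 s) as [Hs0|Hs0].
  - destruct (Hnow s ltac:(lra)) as (B1 & B2 & B4).
    assert (exp (- lam * s) <= 1) by (apply exp_le_1; nra).
    repeat split; auto. nra.
  - assert (HE1 : 1 <= exp (- lam * s)) by (apply exp_ge_1; nra).
    assert (m <= m * exp (- lam * s)) by nra.
    destruct Hsol as (_ & _ & _ & _ & Hinit & _).
    destruct (Hinit s ltac:(lra)) as (-> & -> & _ & ->).
    destruct (Hnear s ltac:(lra)) as (Q1 & Q2 & _ & Q4). rewrite Rminus_0_r in Q2, Q4.
    assert (c * Rabs (p4 s) <= c * d) by (apply Rmult_le_compat_l; lra).
    repeat split; lra.
Qed.

Lemma incidence_le Cvh' c m e d H V x1 x3 x4 :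
  0 < c -> 0 <= Cvh' -> 0 <= H -> 2 * d < V ->
  Rabs (x1 - H) <= m -> c * Rabs x4 <= m * e -> Rabs (x3 + x4 - V) <= 2 * d ->
  Cvh' * Rabs (x4 / (x3 + x4) * x1) <= Cvh' * (H + m) / (c * (V - 2 * d)) * (m * e).
Proof.
  intros Hc HC HH HdV Hx1 Hx4 HN. apply Rabs_le_between in HN.
  assert (Bx1 : Rabs x1 <= H + m).
  { replace x1 with ((x1 - H) + H) by ring. eapply Rle_trans; [apply Rabs_triang|].
    rewrite (Rabs_right H) by lra. lra. }
  assert (Bx4 : Rabs x4 <= m * e / c).
  { apply Rmult_le_reg_l with c; auto. replace (c * (m * e / c)) with (m * e) by (field; lra). auto. }
  eapply Rle_trans.
  - apply Rmult_le_compat_l; [lra|].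
    apply (Rabs_ratio_mult_le _ _ _ (m * e / c) (H + m) (V - 2 * d)); auto; lra.
  - right. field. lra.
Qed.

Lemma vector_incidence_le Chv' c m e d V x2 x3 x4 :
  0 < c -> 0 <= Chv' -> 0 <= V -> 0 <= m -> e <= 1 ->
  Rabs x2 <= m * e -> c * Rabs x4 <= m * e -> Rabs (x3 + x4 - V) <= 2 * d ->
  Rabs (c * Chv' * (x2 * x3)) <= Chv' * (c * (V + 2 * d) + m) * (m * e).
Proof.
  intros Hc HC HV Hm He Hx2 Hx4 HN.
  assert (Hx3 : c * Rabs x3 <= c * (V + 2 * d) + m).
  { assert (Rabs x3 <= V + 2 * d + Rabs x4).
    { replace x3 with ((x3 + x4 - V) + V - x4) by ring.
      eapply Rle_trans; [apply Rabs_triang|]. rewrite Rabs_Ropp.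
      eapply Rle_trans; [apply Rplus_le_compat_r, Rabs_triang|]. rewrite (Rabs_right V) by lra. lra. }
    assert (0 <= m * e) by (generalize (Rabs_pos x2); lra). nra. }
  rewrite Rabs_mult, (Rabs_right (c * Chv')), Rabs_mult by nra.
  replace (c * Chv' * (Rabs x2 * Rabs x3)) with (Chv' * (Rabs x2 * (c * Rabs x3))) by ring.
  replace (Chv' * (c * (V + 2 * d) + m) * (m * e)) with (Chv' * ((m * e) * (c * (V + 2 * d) + m))) by ring.
  apply Rmult_le_compat_l; auto. apply Rmult_le_compat; auto; try apply Rabs_pos.
  apply Rmult_le_pos; [lra|apply Rabs_pos].
Qed.

Lemma stability_estimate lam c m d p1 p2 p3 p4 x1 x2 x3 x4 :
  0 < lam -> 0 < c -> 0 < m -> 0 < d -> d <= m -> c * d <= m -> 4 * d < Sv0 ->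
  Cvh * exp (lam * tau) * (Sh0 + m) < c * (Sv0 - 2 * d) * (muh - lam) ->
  Chv * (c * (Sv0 + 2 * d) + m) < muv - lam ->
  phi_near tau p1 p2 p3 p4 Sh0 0 Sv0 0 d -> solution p1 p2 p3 p4 x1 x2 x3 x4 ->
  forall t, 0 <= t ->
    Rabs (x1 t - Sh0) < m * exp (- lam * t) /\ Rabs (x2 t) < m * exp (- lam * t) /\
    Rabs (c * x4 t) < m * exp (- lam * t).
Proof.
  intros Hlam Hc Hm Hd Hdm Hcd HdV Kh Kv Hnear Hsol.
  assert (HSh := Sh0_pos). assert (HSv := Sv0_pos).
  assert (HN := vector_total_near d _ _ _ _ _ _ _ _ Hnear Hsol).
  assert (Hhist := fun t => stability_history lam c m d _ _ _ _ _ _ _ _ t Hlam Hc Hm Hdm Hcd Hnear Hsol).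
  destruct (solution_cont_from _ _ _ _ _ _ _ _ Hsol) as (C1 & C2 & C3 & C4).
  destruct Hsol as (_ & _ & _ & _ & Hinit & Hder).
  assert (Hbh : bh = muh * Sh0) by (field; lra).
  set (H := Sh0) in *. set (V := Sv0) in *. clearbody H V.
  set (E := fun t => exp (- lam * t)).
  set (kappa := Cvh * (H + m) / (c * (V - 2 * d))).
  assert (Hkappa : forall z, 0 < z -> kappa * z <= kappa * exp (lam * tau) * z < (muh - lam) * z).
  { intros z Hz. assert (HcV : 0 < c * (V - 2 * d)) by (apply Rmult_lt_0_compat; lra).
    assert (Hk0 : 0 <= kappa) by (unfold kappa; apply Rdiv_le_0_compat; [apply Rmult_le_pos|]; lra).
    assert (1 <= exp (lam * tau)) by (apply exp_ge_1; nra).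
    split; apply Rmult_le_compat_r || apply Rmult_lt_compat_r; try lra; [nra|].
    apply Rmult_lt_reg_r with (c * (V - 2 * d)); [exact HcV|].
    unfold kappa. replace (Cvh * (H + m) / (c * (V - 2 * d)) * exp (lam * tau) * (c * (V - 2 * d)))
      with (Cvh * exp (lam * tau) * (H + m)) by (field; lra). lra. }
  set (g := fun (i : nat) t => match i with 0%nat => x1 t - H | 1%nat => x2 t | _ => c * x4 t end).
  set (dg := fun (i : nat) t => match i with
    | 0%nat => bh - Cvh * (x4 t / (x3 t + x4 t)) * x1 t - muh * x1 t
    | 1%nat => Cvh * (x4 (t - tau) / (x3 (t - tau) + x4 (t - tau))) * x1 (t - tau) - muh * x2 t
    | _ => c * (Chv * x2 t * x3 t - muv * x4 t) end).
  assert (Hcases : forall (P : nat -> Prop), P 0%nat -> P 1%nat -> P 2%nat ->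
                     forall i, In i [0; 1; 2]%nat -> P i).
  { intros P P0 P1 P2 i [<-|[<-|[<-|[]]]]; auto. }
  cut (forall i t, In i [0; 1; 2]%nat -> 0 <= t -> Rabs (g i t) < m * E t).
  { intros Hres t Ht. repeat split; [apply (Hres 0%nat)|apply (Hres 1%nat)|apply (Hres 2%nat)]; simpl; auto. }
  apply (abs_lt_barrier [0; 1; 2]%nat g (fun _ t => m * E t) dg (fun _ t => m * (- lam * E t))).
  - apply Hcases; split; unfold g, E;
      auto using cont_from_minus, cont_from_const, cont_from_scal, cont_from_exp_scal.
  - intros i t Hi Ht. destruct (Hder t Ht) as (D1 & D2 & D3 & D4).
    split; [|apply dlim_scal, dlim_exp_scal].
    revert i Hi. apply (Hcases (fun i => derivable_pt_lim (g i) t (dg i t))); unfold g, dg.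
    + eapply dlim_eq; [apply dlim_minus; [apply D1|apply dlim_const]|]. ring.
    + exact D2.
    + apply dlim_scal, D4.
  - assert (HE0 : m * E 0 = m) by (unfold E; rewrite Rmult_0_r, exp_0; ring).
    destruct (Hinit 0 ltac:(lra)) as (E1 & E2 & _ & E4). destruct (Hnear 0 ltac:(lra)) as (Q1 & Q2 & _ & Q4).
    rewrite Rminus_0_r in Q2, Q4.
    apply (Hcases (fun i => Rabs (g i 0) < m * E 0)); unfold g; rewrite HE0;
      [rewrite E1; lra|rewrite E2; lra|].
    rewrite E4, Rabs_mult, (Rabs_right c) by lra.
    assert (c * Rabs (p4 0) < c * d) by (apply Rmult_lt_compat_l; lra). lra.
  - intros i t Hi Ht Hall.
    assert (Hh := Hhist t).
    specialize (Hh ltac:(intros s Hs; generalize (Hall 0%nat s ltac:(simpl; auto) Hs)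
      (Hall 1%nat s ltac:(simpl; auto) Hs) (Hall 2%nat s ltac:(simpl; auto) Hs);
      unfold g; rewrite Rabs_mult, (Rabs_right c) by lra; auto)).
    assert (HmE : 0 < m * E t) by (apply Rmult_lt_0_compat; auto; apply exp_pos).
    assert (HEd : m * E (t - tau) = exp (lam * tau) * (m * E t)).
    { unfold E. replace (- lam * (t - tau)) with (lam * tau + - lam * t) by ring.
      rewrite exp_plus. ring. }
    replace (m * E t * (m * (- lam * E t))) with (m * E t * (- lam * (m * E t))) by ring.
    destruct (Hh t ltac:(lra)) as (B1 & B2 & B4 & B1').
    destruct (Hh (t - tau) ltac:(lra)) as (_ & _ & B4d & B1d').
    revert i Hi.
    apply (Hcases (fun i => Rabs (g i t) = m * E t -> g i t * dg i t < m * E t * (- lam * (m * E t))));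
      unfold g, dg; intros Htouch.
    + replace (bh - Cvh * (x4 t / (x3 t + x4 t)) * x1 t - muh * x1 t)
        with (- muh * (x1 t - H) + - (Cvh * (x4 t / (x3 t + x4 t) * x1 t))) by (rewrite Hbh; ring).
      apply touch_decay; auto. rewrite Rabs_Ropp, Rabs_mult, (Rabs_right Cvh) by lra.
      assert (Hb := incidence_le Cvh c m (E t) d H V (x1 t) (x3 t) (x4 t)).
      specialize (Hb Hc ltac:(lra) ltac:(lra) ltac:(lra) B1' B4 (HN t ltac:(lra))).
      fold kappa in Hb. destruct (Hkappa _ HmE). lra.
    + replace (Cvh * (x4 (t - tau) / (x3 (t - tau) + x4 (t - tau))) * x1 (t - tau) - muh * x2 t)
        with (- muh * x2 t + Cvh * (x4 (t - tau) / (x3 (t - tau) + x4 (t - tau)) * x1 (t - tau))) by ring.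
      apply touch_decay; auto. rewrite Rabs_mult, (Rabs_right Cvh) by lra.
      assert (Hb := incidence_le Cvh c m (E (t - tau)) d H V (x1 (t - tau)) (x3 (t - tau)) (x4 (t - tau))).
      specialize (Hb Hc ltac:(lra) ltac:(lra) ltac:(lra) B1d' B4d (HN (t - tau) ltac:(lra))).
      fold kappa in Hb. rewrite HEd, <- Rmult_assoc in Hb. destruct (Hkappa _ HmE). lra.
    + replace (c * (Chv * x2 t * x3 t - muv * x4 t))
        with (- muv * (c * x4 t) + c * Chv * (x2 t * x3 t)) by ring.
      apply touch_decay; auto.
      apply Rle_lt_trans with (Chv * (c * (V + 2 * d) + m) * (m * E t)).
      * apply (vector_incidence_le Chv c m (E t) d V (x2 t) (x3 t) (x4 t)); auto; try lra.
        -- apply exp_le_1; nra.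
        -- apply HN; lra.
      * apply Rmult_lt_compat_r; auto.
Qed.

Lemma stability_parameters :
  Cvh * Chv * Sh0 < muh * muv ->
  exists c s0, 0 < c /\ 0 < s0 /\ forall s, 0 <= s < s0 ->
    Cvh * exp (s * tau) * (Sh0 + s) < c * (Sv0 - s) * (muh - s) /\
    Chv * (c * (Sv0 + s) + s) < muv - s.
Proof.
  intros HR. assert (HSh := Sh0_pos). assert (HSv := Sv0_pos).
  set (H := Sh0) in *. set (V := Sv0) in *. clearbody H V.
  set (c := (Cvh * H / (V * muh) + muv / (Chv * V)) / 2).
  assert (Hc1 : Cvh * H < c * V * muh).
  { unfold c. apply Rmult_lt_reg_r with (2 * Chv * V); [nra|].
    replace ((Cvh * H / (V * muh) + muv / (Chv * V)) / 2 * V * muh * (2 * Chv * V))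
      with (Cvh * Chv * H * V + muh * muv * V) by (field; lra). nra. }
  assert (Hc2 : Chv * c * V < muv).
  { unfold c. apply Rmult_lt_reg_r with (2 * muh); [lra|].
    replace (Chv * ((Cvh * H / (V * muh) + muv / (Chv * V)) / 2) * V * (2 * muh))
      with (Cvh * Chv * H + muh * muv) by (field; lra). nra. }
  assert (Hc : 0 < c).
  { unfold c. apply Rmult_lt_0_compat; [|lra].
    apply Rplus_lt_0_compat; apply Rdiv_lt_0_compat; nra. }
  destruct (eventually_pos_at_0 (fun s => c * (V - s) * (muh - s) - Cvh * exp (s * tau) * (H + s)))
    as [s1 [Hs1 P1]].
  { apply continuity_pt_of_ex_derive. auto_derive. auto. }
  { cbv beta. rewrite (Rmult_0_l tau), exp_0. nra. }
  destruct (eventually_pos_at_0 (fun s => muv - s - Chv * (c * (V + s) + s))) as [s2 [Hs2 P2]].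
  { apply continuity_pt_of_ex_derive. auto_derive. auto. }
  { cbv beta. nra. }
  exists c, (Rmin s1 s2). split; auto. split; [apply Rmin_glb_lt; auto|].
  intros s Hs. generalize (Rmin_l s1 s2) (Rmin_r s1 s2). intros.
  specialize (P1 s ltac:(lra)). specialize (P2 s ltac:(lra)). simpl in P1, P2. split; lra.
Qed.

Lemma dfe_exponential_bound :
  Cvh * Chv * Sh0 < muh * muv ->
  forall eps, 0 < eps -> exists d s, 0 < d /\ 0 < s /\
    forall p1 p2 p3 p4 x1 x2 x3 x4,
      phi_near tau p1 p2 p3 p4 Sh0 0 Sv0 0 d -> solution p1 p2 p3 p4 x1 x2 x3 x4 ->
      forall t, 0 <= t ->
        Rabs (x1 t - Sh0) < eps * exp (- s * t) /\ Rabs (x2 t - 0) < eps * exp (- s * t) /\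
        Rabs (x3 t - Sv0) < eps * exp (- s * t) /\ Rabs (x4 t - 0) < eps * exp (- s * t).
Proof.
  intros HR eps Heps. assert (HSh := Sh0_pos). assert (HSv := Sv0_pos).
  destruct stability_parameters as [c [s0 [Hc [Hs0 HP]]]]; auto.
  set (s := Rmin (Rmin (s0 / 2) (eps / 2)) (Rmin (c * eps / 2) (Sv0 / 4))).
  assert (Hs1 : s <= s0 / 2) by (unfold s; eapply Rle_trans; apply Rmin_l).
  assert (Hs2 : s <= eps / 2) by (unfold s; eapply Rle_trans; [apply Rmin_l|apply Rmin_r]).
  assert (Hs3 : s <= c * eps / 2) by (unfold s; eapply Rle_trans; [apply Rmin_r|apply Rmin_l]).
  assert (Hs4 : s <= Sv0 / 4) by (unfold s; eapply Rle_trans; apply Rmin_r).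
  assert (Hs : 0 < s) by (unfold s; repeat apply Rmin_glb_lt; nra).
  destruct (HP s ltac:(lra)) as [P1 P2].
  set (d := s / (2 * (1 + c))).
  assert (Hd : 0 < d) by (unfold d; apply Rdiv_lt_0_compat; lra).
  assert (Hd1 : 2 * d * (1 + c) = s) by (unfold d; field; lra).
  assert (Hmuh : 0 < muh - s).
  { apply Rnot_le_lt. intros Hle.
    assert (0 < Cvh * exp (s * tau) * (Sh0 + s))
      by (apply Rmult_lt_0_compat; [apply Rmult_lt_0_compat; [lra|apply exp_pos]|lra]).
    assert (0 <= c * (Sv0 - s)) by (apply Rmult_le_pos; lra). nra. }
  assert (Hmuv : s < muv).
  { assert (0 < Chv * (c * (Sv0 + s) + s)) by (apply Rmult_lt_0_compat; nra). lra. }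
  exists d, s. split; auto. split; auto.
  intros p1 p2 p3 p4 x1 x2 x3 x4 Hnear Hsol t Ht.
  destruct (stability_estimate s c s d p1 p2 p3 p4 x1 x2 x3 x4) with (t := t)
    as (B1 & B2 & B4); auto; try nra.
  { eapply Rlt_le_trans; [apply P1|]. apply Rmult_le_compat_r; [lra|].
    apply Rmult_le_compat_l; nra. }
  { eapply Rle_lt_trans; [|apply P2]. apply Rmult_le_compat_l; nra. }
  assert (HN := vector_total_decay d p1 p2 p3 p4 x1 x2 x3 x4 Hnear Hsol t Ht).
  set (E := exp (- s * t)) in *.
  assert (HE : 0 < E) by apply exp_pos.
  assert (HEv : exp (- muv * t) <= E) by (apply exp_le_exp; nra).
  assert (B4' : Rabs (x4 t) < eps / 2 * E).
  { rewrite Rabs_mult, (Rabs_right c) in B4 by lra.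
    apply Rmult_lt_reg_l with c; auto. apply Rlt_le_trans with (s * E); [lra|].
    replace (c * (eps / 2 * E)) with (c * eps / 2 * E) by field.
    apply Rmult_le_compat_r; lra. }
  assert (B3 : Rabs (x3 t - Sv0) <= 2 * d * E + Rabs (x4 t)).
  { replace (x3 t - Sv0) with ((x3 t + x4 t - Sv0) - x4 t) by ring.
    eapply Rle_trans; [apply Rabs_triang|]. rewrite Rabs_Ropp.
    assert (2 * d * exp (- muv * t) <= 2 * d * E) by (apply Rmult_le_compat_l; lra). lra. }
  assert (2 * d <= s) by nra.
  rewrite !Rminus_0_r. repeat split; nra.
Qed.

Lemma instability_parameters :
  muh * muv < Cvh * Chv * Sh0 ->
  exists c s0, 0 < c /\ 0 < s0 /\ forall s, 0 <= s < s0 ->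
    c * Sv0 * (muh + s) < Cvh * exp (- s * tau) * (Sh0 - s) /\
    muv + s < c * Chv * (Sv0 - s).
Proof.
  intros HR. assert (HSh := Sh0_pos). assert (HSv := Sv0_pos).
  set (H := Sh0) in *. set (V := Sv0) in *. clearbody H V.
  set (c := (Cvh * H / (V * muh) + muv / (Chv * V)) / 2).
  assert (Hc1 : c * V * muh < Cvh * H).
  { unfold c. apply Rmult_lt_reg_r with (2 * Chv * V); [nra|].
    replace ((Cvh * H / (V * muh) + muv / (Chv * V)) / 2 * V * muh * (2 * Chv * V))
      with (Cvh * Chv * H * V + muh * muv * V) by (field; lra). nra. }
  assert (Hc2 : muv < c * Chv * V).
  { unfold c. apply Rmult_lt_reg_r with (2 * muh); [lra|].
    replace ((Cvh * H / (V * muh) + muv / (Chv * V)) / 2 * Chv * V * (2 * muh))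
      with (Cvh * Chv * H + muh * muv) by (field; lra). nra. }
  assert (Hc : 0 < c).
  { unfold c. apply Rmult_lt_0_compat; [|lra].
    apply Rplus_lt_0_compat; apply Rdiv_lt_0_compat; nra. }
  destruct (eventually_pos_at_0 (fun s => Cvh * exp (- s * tau) * (H - s) - c * V * (muh + s)))
    as [s1 [Hs1 P1]].
  { apply continuity_pt_of_ex_derive. auto_derive. auto. }
  { cbv beta. rewrite Ropp_0, (Rmult_0_l tau), exp_0. nra. }
  destruct (eventually_pos_at_0 (fun s => c * Chv * (V - s) - (muv + s))) as [s2 [Hs2 P2]].
  { apply continuity_pt_of_ex_derive. auto_derive. auto. }
  { cbv beta. nra. }
  exists c, (Rmin s1 s2). split; auto. split; [apply Rmin_glb_lt; auto|].
  intros s Hs. generalize (Rmin_l s1 s2) (Rmin_r s1 s2). intros.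
  specialize (P1 s ltac:(lra)). specialize (P2 s ltac:(lra)). simpl in P1, P2. split; lra.
Qed.

Lemma incidence_feedback C c V mu k h y x1 x4 :
  0 < c -> 0 < V -> 0 < C -> 0 < y -> 0 <= k -> 0 <= h ->
  c * V * mu < C * k * h -> y * k <= c * x4 -> h <= x1 -> mu * y < C * (x4 / V) * x1.
Proof.
  intros Hc HV HC Hy Hk Hh Hrate Hx4 Hx1.
  assert (Hx4' : y * k / c <= x4).
  { apply Rmult_le_reg_l with c; auto. replace (c * (y * k / c)) with (y * k) by (field; lra). lra. }
  assert (H0 : 0 <= y * k / c) by (apply Rdiv_le_0_compat; nra).
  apply Rlt_le_trans with (C * (y * k / c / V) * h).
  - apply Rmult_lt_reg_r with (c * V / y); [apply Rdiv_lt_0_compat; nra|].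
    replace (mu * y * (c * V / y)) with (c * V * mu) by (field; lra).
    replace (C * (y * k / c / V) * h * (c * V / y)) with (C * k * h) by (field; lra). lra.
  - apply Rmult_le_compat; try nra.
    + apply Rmult_le_pos; [lra|]. apply Rdiv_le_0_compat; lra.
    + apply Rmult_le_compat_l; [lra|]. unfold Rdiv. apply Rmult_le_compat_r; [|lra].
      left; apply Rinv_0_lt_compat; lra.
Qed.

Lemma escape_history q m s c x1 x2 x3 x4 t :
  0 < s -> 0 < m -> m < q -> m < c * q ->
  solution (fun _ => Sh0) (fun _ => q) (fun _ => Sv0 - q) (fun _ => q) x1 x2 x3 x4 ->
  (forall u, 0 <= u <= t -> m * exp (s * u) <= x2 u /\ m * exp (s * u) <= c * x4 u) ->
  forall u, - tau <= u <= t -> m * exp (s * u) <= x2 u /\ m * exp (s * u) <= c * x4 u.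
Proof.
  intros Hs Hm Hmq Hmcq Hsol Hnow u Hu. destruct (Rle_or_lt 0 u) as [Hu0|Hu0]; [apply Hnow; lra|].
  destruct Hsol as (_ & _ & _ & _ & Hinit & _). destruct (Hinit u ltac:(lra)) as (_ & -> & _ & ->).
  assert (m * exp (s * u) <= m).
  { rewrite <- (Rmult_1_r m) at 2. apply Rmult_le_compat_l; [lra|]. apply exp_le_1; nra. }
  split; lra.
Qed.

(* On the lower barrier [m exp (s t)] each infected compartment is fed by the other faster
   than it decays. *)
Lemma escape_estimate c s m q x1 x2 x3 x4 :
  0 < c -> 0 < s -> 0 < m -> m < q -> m < c * q -> s < Sh0 -> s < Sv0 ->
  c * Sv0 * (muh + s) < Cvh * exp (- s * tau) * (Sh0 - s) ->
  muv + s < c * Chv * (Sv0 - s) ->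
  solution (fun _ => Sh0) (fun _ => q) (fun _ => Sv0 - q) (fun _ => q) x1 x2 x3 x4 ->
  (forall t, 0 <= t -> Rabs (x1 t - Sh0) < s /\ Rabs (x3 t - Sv0) < s) ->
  forall t, 0 <= t -> m * exp (s * t) < x2 t.
Proof.
  intros Hc Hs Hm Hmq Hmcq HsH HsV J1 J2 Hsol Hstay.
  assert (HSh := Sh0_pos). assert (HSv := Sv0_pos).
  assert (HNV : forall t, - tau <= t -> x3 t + x4 t = Sv0).
  { intros t Ht. destruct (Rle_or_lt t 0) as [Hle|Hlt].
    - destruct Hsol as (_ & _ & _ & _ & Hinit & _). destruct (Hinit t ltac:(lra)) as (_ & _ & -> & ->). ring.
    - rewrite (solution_vector_total _ _ _ _ _ _ _ _ Hsol t) by lra.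
      destruct Hsol as (_ & _ & _ & _ & Hinit & _).
      destruct (Hinit 0 ltac:(lra)) as (_ & _ & -> & ->). ring. }
  assert (Hx1d : forall t, 0 <= t -> Sh0 - s <= x1 (t - tau)).
  { intros t Ht. destruct (Rle_or_lt 0 (t - tau)) as [Hu|Hu].
    - destruct (Hstay (t - tau) Hu) as (T1 & _). apply Rabs_def2 in T1. lra.
    - destruct Hsol as (_ & _ & _ & _ & Hinit & _). destruct (Hinit (t - tau) ltac:(lra)) as (-> & _). lra. }
  assert (Hhist := fun t => escape_history q m s c x1 x2 x3 x4 t Hs Hm Hmq Hmcq Hsol).
  destruct (solution_cont_from _ _ _ _ _ _ _ _ Hsol) as (C1 & C2 & C3 & C4).
  destruct Hsol as (_ & _ & _ & _ & Hinit & Hder).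
  set (G := fun t => m * exp (s * t)).
  set (h := fun (i : nat) t => match i with 0%nat => x2 t - G t | _ => c * x4 t - G t end).
  set (dh := fun (i : nat) t => match i with
    | 0%nat => Cvh * (x4 (t - tau) / (x3 (t - tau) + x4 (t - tau))) * x1 (t - tau) - muh * x2 t - s * G t
    | _ => c * (Chv * x2 t * x3 t - muv * x4 t) - s * G t end).
  assert (Hcases : forall (P : nat -> Prop), P 0%nat -> P 1%nat -> forall i, In i [0; 1]%nat -> P i).
  { intros P P0 P1 i [<-|[<-|[]]]; auto. }
  assert (Hpos : forall i t, In i [0; 1]%nat -> 0 <= t -> 0 < h i t).
  { apply (first_touch_positive [0; 1]%nat h dh).
    - apply Hcases; unfold h, G; apply cont_from_minus; auto using cont_from_scal, cont_from_exp_scal.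
    - intros i t Hi Ht. destruct (Hder t Ht) as (_ & D2 & _ & D4).
      assert (DG : derivable_pt_lim G t (s * G t)).
      { unfold G. eapply dlim_eq; [apply dlim_scal, dlim_exp_scal|ring]. }
      revert i Hi. apply (Hcases (fun i => derivable_pt_lim (h i) t (dh i t))); unfold h, dh;
        apply dlim_minus; auto using dlim_scal.
    - assert (HG0 : G 0 = m) by (unfold G; rewrite Rmult_0_r, exp_0; ring).
      destruct (Hinit 0 ltac:(lra)) as (_ & E2 & _ & E4).
      apply (Hcases (fun i => 0 < h i 0)); unfold h; rewrite HG0; [rewrite E2|rewrite E4]; lra.
    - intros i t Hi Ht Hall.
      assert (Hh := Hhist t ltac:(intros u Hu; generalize (Hall 0%nat u ltac:(simpl; auto) Hu)
                                    (Hall 1%nat u ltac:(simpl; auto) Hu); unfold h, G; lra)).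
      assert (HGd : G (t - tau) = G t * exp (- s * tau)).
      { unfold G. replace (s * (t - tau)) with (s * t + - s * tau) by ring. rewrite exp_plus. ring. }
      assert (HG : 0 < G t) by (apply Rmult_lt_0_compat; auto; apply exp_pos).
      destruct (Hstay t ltac:(lra)) as (_ & S3). apply Rabs_def2 in S3.
      revert i Hi. apply (Hcases (fun i => h i t = 0 -> 0 < dh i t)); unfold h, dh; intros Hz.
      + destruct (Hh (t - tau) ltac:(lra)) as (_ & Hx4d).
        change (G (t - tau) <= c * x4 (t - tau)) in Hx4d. rewrite HGd in Hx4d.
        rewrite HNV by lra. replace (x2 t) with (G t) by lra.
        assert (muh * G t + s * G t < Cvh * (x4 (t - tau) / Sv0) * x1 (t - tau)); [|lra].
        replace (muh * G t + s * G t) with ((muh + s) * G t) by ring.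
        apply (incidence_feedback Cvh c Sv0 (muh + s) (exp (- s * tau)) (Sh0 - s));
          auto; try lra; [left; apply exp_pos|apply Hx1d; lra].
      + destruct (Hh t ltac:(lra)) as (Hx2 & _). change (G t <= x2 t) in Hx2.
        replace (c * (Chv * x2 t * x3 t - muv * x4 t) - s * G t)
          with (c * Chv * (x2 t / 1) * x3 t - muv * (c * x4 t) - s * G t) by (field; lra).
        replace (c * x4 t) with (G t) by lra.
        assert ((muv + s) * G t < c * Chv * (x2 t / 1) * x3 t); [|lra].
        apply (incidence_feedback (c * Chv) 1 1 (muv + s) 1 (Sv0 - s)); try lra; nra. }
  intros t Ht. specialize (Hpos 0%nat t ltac:(simpl; auto) Ht). unfold h, G in Hpos. lra.
Qed.

End HostVectorModel.

Lemma loc_asym_stable_of_exponential_bound bh bv muh muv Cvh Chv tau e1 e2 e3 e4 :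
  (forall eps, 0 < eps -> exists d s, 0 < d /\ 0 < s /\
    forall p1 p2 p3 p4 x1 x2 x3 x4,
      phi_near tau p1 p2 p3 p4 e1 e2 e3 e4 d ->
      is_solution bh bv muh muv Cvh Chv tau p1 p2 p3 p4 x1 x2 x3 x4 ->
      forall t, 0 <= t ->
        Rabs (x1 t - e1) < eps * exp (- s * t) /\ Rabs (x2 t - e2) < eps * exp (- s * t) /\
        Rabs (x3 t - e3) < eps * exp (- s * t) /\ Rabs (x4 t - e4) < eps * exp (- s * t)) ->
  loc_asym_stable bh bv muh muv Cvh Chv tau e1 e2 e3 e4.
Proof.
  intros Hexp. split.
  - intros eps Heps. destruct (Hexp eps Heps) as [d [s [Hd [Hs Hb]]]].
    exists d. split; auto. intros p1 p2 p3 p4 x1 x2 x3 x4 _ Hnear Hsol t Ht.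
    assert (Hle : eps * exp (- s * t) <= eps) by (generalize (exp_le_1 (- s * t) ltac:(nra)); nra).
    destruct (Hb p1 p2 p3 p4 x1 x2 x3 x4 Hnear Hsol t Ht) as (B1 & B2 & B3 & B4).
    repeat split; lra.
  - destruct (Hexp 1 Rlt_0_1) as [d [s [Hd [Hs Hb]]]].
    exists d. split; auto. intros p1 p2 p3 p4 x1 x2 x3 x4 _ Hnear Hsol eps Heps.
    exists (Rmax 0 (- ln eps / s)). intros t Ht.
    assert (Ht0 : 0 <= t) by (eapply Rle_trans; [apply Rmax_l|apply Ht]).
    assert (Hts : - ln eps / s <= t) by (eapply Rle_trans; [apply Rmax_r|apply Ht]).
    assert (Hsmall : 1 * exp (- s * t) <= eps).
    { rewrite Rmult_1_l, <- (exp_ln eps Heps). apply exp_le_exp.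
      apply Rmult_le_compat_l with (r := s) in Hts; [|lra].
      replace (s * (- ln eps / s)) with (- ln eps) in Hts by (field; lra). lra. }
    destruct (Hb p1 p2 p3 p4 x1 x2 x3 x4 Hnear Hsol t Ht0) as (B1 & B2 & B3 & B4).
    repeat split; lra.
Qed.

(** * A truncated system and a solution escaping from E0 *)

Definition clamp (a b x : R) : R := Rmax a (Rmin b x).

Lemma clamp_range a b x : a <= b -> a <= clamp a b x <= b.
Proof. intros. unfold clamp. split; [apply Rmax_l|apply Rmax_lub; [auto|apply Rmin_l]]. Qed.

Lemma clamp_id a b x : a <= x <= b -> clamp a b x = x.
Proof. intros. unfold clamp. rewrite Rmin_right, Rmax_right; lra. Qed.

Lemma clamp_below a b x : x <= a <= b -> clamp a b x = a.
Proof. intros. unfold clamp. rewrite Rmin_right, Rmax_left; lra. Qed.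

Lemma clamp_lipschitz a b x y : Rabs (clamp a b x - clamp a b y) <= Rabs (x - y).
Proof.
  unfold clamp, Rmax, Rmin.
  destruct (Rle_dec b x), (Rle_dec b y), (Rle_dec a b), (Rle_dec a x), (Rle_dec a y);
    unfold Rabs; repeat destruct Rcase_abs; lra.
Qed.

Lemma clamp_abs_le a b x M : - M <= a -> a <= b -> b <= M -> Rabs (clamp a b x) <= M.
Proof. intros. destruct (clamp_range a b x); auto. apply Rabs_le. lra. Qed.

Definition bilinear_rate (a k m x y z : R) : R := a + k * (x * y) + m * z.

Lemma bilinear_rate_lipschitz a k m x y z x' y' z' M D :
  Rabs x <= M -> Rabs y' <= M -> Rabs (x - x') <= D -> Rabs (y - y') <= D -> Rabs (z - z') <= D ->
  Rabs (bilinear_rate a k m x y z - bilinear_rate a k m x' y' z') <= (2 * M * Rabs k + Rabs m) * D.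
Proof.
  intros Hx Hy' Hdx Hdy Hdz. unfold bilinear_rate.
  replace (a + k * (x * y) + m * z - (a + k * (x' * y') + m * z'))
    with (k * (x * (y - y') + y' * (x - x')) + m * (z - z')) by ring.
  eapply Rle_trans; [apply Rabs_triang|]. rewrite !Rabs_mult.
  assert (Hxy : Rabs (x * (y - y') + y' * (x - x')) <= 2 * M * D).
  { eapply Rle_trans; [apply Rabs_triang|]. rewrite !Rabs_mult.
    assert (Rabs x * Rabs (y - y') <= M * D) by (apply Rmult_le_compat; auto; apply Rabs_pos).
    assert (Rabs y' * Rabs (x - x') <= M * D) by (apply Rmult_le_compat; auto; apply Rabs_pos).
    lra. }
  assert (Rabs k * Rabs (x * (y - y') + y' * (x - x')) <= Rabs k * (2 * M * D))
    by (apply Rmult_le_compat_l; auto; apply Rabs_pos).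
  assert (Rabs m * Rabs (z - z') <= Rabs m * D) by (apply Rmult_le_compat_l; auto; apply Rabs_pos).
  lra.
Qed.

Lemma bilinear_rate_bound a k m x y z M :
  Rabs x <= M -> Rabs y <= M -> Rabs z <= M ->
  Rabs (bilinear_rate a k m x y z) <= Rabs a + Rabs k * (M * M) + Rabs m * M.
Proof.
  intros Hx Hy Hz. unfold bilinear_rate.
  eapply Rle_trans; [apply Rabs_triang|]. apply Rplus_le_compat.
  - eapply Rle_trans; [apply Rabs_triang|]. apply Rplus_le_compat_l.
    rewrite !Rabs_mult. apply Rmult_le_compat_l; [apply Rabs_pos|].
    apply Rmult_le_compat; auto; apply Rabs_pos.
  - rewrite Rabs_mult. apply Rmult_le_compat_l; auto. apply Rabs_pos.
Qed.

Section TruncatedSystem.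

Variables bh bv muh muv Cvh Chv q : R.
Hypotheses (bh_pos : 0 < bh) (bv_pos : 0 < bv) (muh_pos : 0 < muh) (muv_pos : 0 < muv)
  (Cvh_pos : 0 < Cvh) (Chv_pos : 0 < Chv) (q_pos : 0 < q) (q_lt : q < bv / muv).

Local Notation Sh0 := (bh / muh).
Local Notation Sv0 := (bv / muv).

(* Upper edges of a box that the solutions considered below never leave. *)
Definition box_top (k : nat) : R :=
  match k with
  | 0%nat => Sh0
  | 1%nat => q + Cvh * (Sh0 + 1) / muh
  | 2%nat => Sv0
  | _ => q + Chv * (q + Cvh * (Sh0 + 1) / muh + 1) * (Sv0 + 1) / muv
  end.

Lemma box_top_pos k : 0 < box_top k.
Proof.
  assert (HSh := Sh0_pos bh muh bh_pos muh_pos). assert (HSv := Sv0_pos bv muv bv_pos muv_pos).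
  assert (0 < Cvh * (Sh0 + 1) / muh) by (apply Rdiv_lt_0_compat; nra).
  destruct k as [|[|[|k]]]; simpl; try lra.
  assert (0 < Chv * (q + Cvh * (Sh0 + 1) / muh + 1) * (Sv0 + 1) / muv); [|lra].
  apply Rdiv_lt_0_compat; [apply Rmult_lt_0_compat; [apply Rmult_lt_0_compat|]|]; lra.
Qed.

(* The model's vector field with each state variable clamped to the box enlarged by 1
   (a linear term tolerates the value -1) and [N_v] frozen at [Sv0]; the delayed
   arguments are [v]. *)
Definition truncated_rate (i : nat) (u v : nat -> R) : R :=
  let cl k (w : nat -> R) := clamp 0 (box_top k + 1) (w k) in
  let lin k := clamp (-1) (box_top k + 1) (u k) in
  match i with
  | 0%nat => bilinear_rate bh (- (Cvh / Sv0)) (- muh) (clamp 0 Sv0 (u 3%nat)) (cl 0%nat u) (lin 0%nat)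
  | 1%nat => bilinear_rate 0 (Cvh / Sv0) (- muh) (clamp 0 Sv0 (v 3%nat)) (cl 0%nat v) (lin 1%nat)
  | 2%nat => bilinear_rate bv (- Chv) (- muv) (cl 1%nat u) (cl 2%nat u) (lin 2%nat)
  | _ => bilinear_rate 0 Chv (- muv) (cl 1%nat u) (cl 2%nat u) (lin 3%nat)
  end.

Definition clamp_bound : R :=
  1 + Sv0 + box_top 0 + box_top 1 + box_top 2 + box_top 3 + 4.

Definition coefficient_bound : R := bh + bv + Cvh / Sv0 + Chv + muh + muv.

Lemma clamp_bound_ge k : (k < 4)%nat -> 1 + box_top k + 1 <= clamp_bound /\ 1 + Sv0 <= clamp_bound.
Proof.
  intros Hk. generalize (box_top_pos 0) (box_top_pos 1) (box_top_pos 2) (box_top_pos 3).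
  assert (HSv := Sv0_pos bv muv bv_pos muv_pos).
  unfold clamp_bound. destruct k as [|[|[|[|k]]]]; try lia; intros; lra.
Qed.

Lemma truncated_clamps_bounded k (w : nat -> R) : (k < 4)%nat ->
  Rabs (clamp 0 (box_top k + 1) (w k)) <= clamp_bound /\
  Rabs (clamp (-1) (box_top k + 1) (w k)) <= clamp_bound /\
  Rabs (clamp 0 Sv0 (w k)) <= clamp_bound.
Proof.
  intros Hk. destruct (clamp_bound_ge k Hk). assert (HSv := Sv0_pos bv muv bv_pos muv_pos).
  generalize (box_top_pos k). intros.
  repeat split; apply clamp_abs_le; lra.
Qed.

Lemma coefficient_bound_ge :
  Rabs bh <= coefficient_bound /\ Rabs bv <= coefficient_bound /\ Rabs 0 <= coefficient_bound /\
  Rabs (Cvh / Sv0) <= coefficient_bound /\ Rabs (- (Cvh / Sv0)) <= coefficient_bound /\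
  Rabs Chv <= coefficient_bound /\ Rabs (- Chv) <= coefficient_bound /\
  Rabs (- muh) <= coefficient_bound /\ Rabs (- muv) <= coefficient_bound.
Proof.
  assert (HSv := Sv0_pos bv muv bv_pos muv_pos).
  assert (0 < Cvh / Sv0) by (apply Rdiv_lt_0_compat; lra).
  unfold coefficient_bound. rewrite ?Rabs_Ropp, Rabs_R0, !Rabs_right by lra. repeat split; lra.
Qed.

Lemma truncated_rate_lipschitz i u v u' v' : (i < 4)%nat ->
  Rabs (truncated_rate i u v - truncated_rate i u' v') <=
  (2 * clamp_bound + 1) * coefficient_bound * (l1_dist 4 u u' + l1_dist 4 v v').
Proof.
  intros Hi. set (D := l1_dist 4 u u' + l1_dist 4 v v').
  assert (Hu : forall k, (k < 4)%nat -> Rabs (u k - u' k) <= D).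
  { intros k Hk. generalize (l1_dist_ge_coord 4 u u' k Hk) (l1_dist_nonneg 4 v v'). unfold D. lra. }
  assert (Hv : forall k, (k < 4)%nat -> Rabs (v k - v' k) <= D).
  { intros k Hk. generalize (l1_dist_ge_coord 4 v v' k Hk) (l1_dist_nonneg 4 u u'). unfold D. lra. }
  assert (HD : 0 <= D) by (unfold D; generalize (l1_dist_nonneg 4 u u') (l1_dist_nonneg 4 v v'); lra).
  assert (HM : 0 <= clamp_bound) by (destruct (clamp_bound_ge 0 ltac:(lia)); generalize (box_top_pos 0); lra).
  assert (Hcoef : forall k m, Rabs k <= coefficient_bound -> Rabs m <= coefficient_bound ->
            (2 * clamp_bound * Rabs k + Rabs m) * D <= (2 * clamp_bound + 1) * coefficient_bound * D).
  { intros k m Hk Hm. apply Rmult_le_compat_r; auto.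
    assert (2 * clamp_bound * Rabs k <= 2 * clamp_bound * coefficient_bound)
      by (apply Rmult_le_compat_l; lra).
    lra. }
  assert (Hcl : forall a b w w' k, (k < 4)%nat -> (forall j, (j < 4)%nat -> Rabs (w j - w' j) <= D) ->
            Rabs (clamp a b (w k) - clamp a b (w' k)) <= D).
  { intros a b w w' k Hk Hw. eapply Rle_trans; [apply clamp_lipschitz|auto]. }
  destruct coefficient_bound_ge as (A1 & A2 & A3 & A4 & A5 & A6 & A7 & A8 & A9).
  destruct i as [|[|[|[|i]]]]; try lia; unfold truncated_rate;
    (eapply Rle_trans; [apply bilinear_rate_lipschitz with (M := clamp_bound)|apply Hcoef; auto]);
    first [apply truncated_clamps_bounded; lia | apply Hcl; auto; lia].
Qed.

Lemma truncated_rate_bounded i u v : (i < 4)%nat ->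
  Rabs (truncated_rate i u v) <=
  coefficient_bound + coefficient_bound * (clamp_bound * clamp_bound) + coefficient_bound * clamp_bound.
Proof.
  intros Hi.
  assert (HM : 0 <= clamp_bound) by (destruct (clamp_bound_ge 0 ltac:(lia)); generalize (box_top_pos 0); lra).
  destruct coefficient_bound_ge as (A1 & A2 & A3 & A4 & A5 & A6 & A7 & A8 & A9).
  assert (Hcoef : forall a k m, Rabs a <= coefficient_bound -> Rabs k <= coefficient_bound ->
            Rabs m <= coefficient_bound ->
            Rabs a + Rabs k * (clamp_bound * clamp_bound) + Rabs m * clamp_bound <=
            coefficient_bound + coefficient_bound * (clamp_bound * clamp_bound)
            + coefficient_bound * clamp_bound).
  { intros a k m Ha Hk Hm.
    assert (Rabs k * (clamp_bound * clamp_bound) <= coefficient_bound * (clamp_bound * clamp_bound))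
      by (apply Rmult_le_compat_r; nra).
    assert (Rabs m * clamp_bound <= coefficient_bound * clamp_bound) by (apply Rmult_le_compat_r; lra).
    lra. }
  destruct i as [|[|[|[|i]]]]; try lia; unfold truncated_rate;
    (eapply Rle_trans; [apply bilinear_rate_bound|apply Hcoef; auto]);
    apply truncated_clamps_bounded; lia.
Qed.

Lemma truncated_rate_inward_low k u v eta : (k < 4)%nat -> 0 < eta <= 1 -> u k = - eta ->
  0 < truncated_rate k u v.
Proof.
  intros Hk Heta Hu.
  assert (HSv := Sv0_pos bv muv bv_pos muv_pos).
  assert (Hprod : forall a b x y, 0 <= a -> 0 <= b -> 0 <= clamp 0 a x * clamp 0 b y).
  { intros a b x y Ha Hb. destruct (clamp_range 0 a x Ha), (clamp_range 0 b y Hb). nra. }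
  assert (Hc : forall k, 0 <= box_top k + 1) by (intros; generalize (box_top_pos k0); lra).
  assert (HCS : 0 < Cvh / Sv0) by (apply Rdiv_lt_0_compat; lra).
  assert (Hlin : clamp (-1) (box_top k + 1) (u k) = - eta)
    by (rewrite Hu; apply clamp_id; generalize (box_top_pos k); lra).
  assert (Hzero : clamp 0 (box_top k + 1) (u k) = 0)
    by (rewrite Hu; apply clamp_below; generalize (box_top_pos k); lra).
  destruct k as [|[|[|[|k]]]]; try lia; unfold truncated_rate, bilinear_rate; rewrite Hlin.
  - rewrite Hzero, Rmult_0_r. nra.
  - generalize (Hprod Sv0 (box_top 0 + 1) (v 3%nat) (v 0%nat) ltac:(lra) (Hc 0%nat)). nra.
  - rewrite Hzero, Rmult_0_r. nra.
  - generalize (Hprod _ _ (u 1%nat) (u 2%nat) (Hc 1%nat) (Hc 2%nat)). nra.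
Qed.

Lemma truncated_rate_inward_high k u v eta : (k < 4)%nat -> 0 < eta <= 1 -> u k = box_top k + eta ->
  truncated_rate k u v < 0.
Proof.
  intros Hk Heta Hu.
  assert (HSv := Sv0_pos bv muv bv_pos muv_pos).
  assert (Hprod : forall a b x y, 0 <= a -> 0 <= b ->
            0 <= clamp 0 a x * clamp 0 b y <= a * b).
  { intros a b x y Ha Hb. destruct (clamp_range 0 a x Ha), (clamp_range 0 b y Hb). split; [nra|].
    apply Rmult_le_compat; lra. }
  assert (Hc : forall k, 0 <= box_top k + 1) by (intros; generalize (box_top_pos k0); lra).
  assert (HCS : 0 < Cvh / Sv0) by (apply Rdiv_lt_0_compat; lra).
  assert (Hlin : clamp (-1) (box_top k + 1) (u k) = box_top k + eta)
    by (rewrite Hu; apply clamp_id; generalize (box_top_pos k); lra).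
  destruct k as [|[|[|[|k]]]]; try lia; unfold truncated_rate, bilinear_rate; rewrite Hlin.
  - destruct (Hprod Sv0 (box_top 0 + 1) (u 3%nat) (u 0%nat) ltac:(lra) (Hc 0%nat)).
    replace bh with (muh * box_top 0) by (simpl; field; lra). nra.
  - destruct (Hprod Sv0 (box_top 0 + 1) (v 3%nat) (v 0%nat) ltac:(lra) (Hc 0%nat)).
    assert (Cvh / Sv0 * (clamp 0 Sv0 (v 3%nat) * clamp 0 (box_top 0 + 1) (v 0%nat)) <= Cvh * (Sh0 + 1)).
    { replace (Cvh * (Sh0 + 1)) with (Cvh / Sv0 * (Sv0 * (box_top 0 + 1))) by (simpl; field; lra).
      apply Rmult_le_compat_l; lra. }
    assert (muh * box_top 1 = muh * q + Cvh * (Sh0 + 1)) by (simpl; field; lra).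
    assert (0 < muh * q) by nra. nra.
  - destruct (Hprod (box_top 1 + 1) (box_top 2 + 1) (u 1%nat) (u 2%nat) (Hc 1%nat) (Hc 2%nat)).
    replace bv with (muv * box_top 2) by (simpl; field; lra). nra.
  - destruct (Hprod (box_top 1 + 1) (box_top 2 + 1) (u 1%nat) (u 2%nat) (Hc 1%nat) (Hc 2%nat)).
    assert (muv * box_top 3 = muv * q + Chv * ((box_top 1 + 1) * (box_top 2 + 1))) by (simpl; field; lra).
    assert (0 < muv * q) by nra.
    assert (Chv * (clamp 0 (box_top 1 + 1) (u 1%nat) * clamp 0 (box_top 2 + 1) (u 2%nat))
            <= Chv * ((box_top 1 + 1) * (box_top 2 + 1))) by (apply Rmult_le_compat_l; lra).
    nra.
Qed.

Definition constant_history (k : nat) : R :=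
  match k with 0%nat => Sh0 | 1%nat => q | 2%nat => Sv0 - q | _ => q end.

Lemma constant_history_in_box k : 0 <= constant_history k <= box_top k.
Proof.
  assert (HSh := Sh0_pos bh muh bh_pos muh_pos).
  assert (H1 : 0 <= Cvh * (Sh0 + 1) / muh) by (apply Rdiv_le_0_compat; nra).
  assert (H3 : 0 <= Chv * (q + Cvh * (Sh0 + 1) / muh + 1) * (Sv0 + 1) / muv).
  { assert (HSv := Sv0_pos bv muv bv_pos muv_pos).
    apply Rdiv_le_0_compat; [apply Rmult_le_pos; [apply Rmult_le_pos|]|]; lra. }
  destruct k as [|[|[|k]]]; simpl; lra.
Qed.

Lemma truncated_solution_in_box tau (X : R -> nat -> R) :
  (forall t i, t <= 0 -> X t i = constant_history i) ->
  (forall k a, (k < 4)%nat -> cont_from (fun t => X t k) a) ->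
  (forall i t, (i < 4)%nat -> 0 < t ->
     derivable_pt_lim (fun s => X s i) t (truncated_rate i (X t) (X (t - tau)))) ->
  forall k t, (k < 4)%nat -> 0 <= X t k <= box_top k.
Proof.
  intros Hhist Hcont Hder k t Hk.
  assert (Hinit : forall t, t <= 0 -> 0 <= X t k <= box_top k).
  { intros s Hs. rewrite Hhist by auto. apply constant_history_in_box. }
  destruct (Rle_or_lt t 0) as [Ht|Ht]; [auto|]. split.
  - apply (ge_of_inward (fun s => X s k) (fun s => truncated_rate k (X s) (X (s - tau)))); auto; try lra.
    + apply Hinit; lra.
    + intros s eta Hs Heta Hx. apply truncated_rate_inward_low with eta; auto. lra.
  - apply (le_of_inward (fun s => X s k) (fun s => truncated_rate k (X s) (X (s - tau)))); auto; try lra.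
    + apply Hinit; lra.
    + intros s eta Hs Heta Hx. apply truncated_rate_inward_high with eta; auto.
Qed.

Lemma truncated_solution_is_solution tau (X : R -> nat -> R) :
  (forall t i, t <= 0 -> X t i = constant_history i) ->
  (forall k a, (k < 4)%nat -> cont_from (fun t => X t k) a) ->
  (forall i t, (i < 4)%nat -> 0 < t ->
     derivable_pt_lim (fun s => X s i) t (truncated_rate i (X t) (X (t - tau)))) ->
  is_solution bh bv muh muv Cvh Chv tau (fun _ => Sh0) (fun _ => q) (fun _ => Sv0 - q) (fun _ => q)
    (fun t => X t 0%nat) (fun t => X t 1%nat) (fun t => X t 2%nat) (fun t => X t 3%nat).
Proof.
  intros Hhist Hcont Hder. assert (HSv := Sv0_pos bv muv bv_pos muv_pos).
  assert (Hbox := truncated_solution_in_box tau X Hhist Hcont Hder).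
  assert (Hcl : forall t k, (k < 4)%nat ->
            clamp 0 (box_top k + 1) (X t k) = X t k /\ clamp (-1) (box_top k + 1) (X t k) = X t k).
  { intros t k Hk. destruct (Hbox k t Hk). split; apply clamp_id; lra. }
  assert (HN : forall t, X t 2%nat + X t 3%nat = Sv0).
  { intros t. destruct (Rle_or_lt t 0) as [Ht|Ht].
    - rewrite !Hhist by auto. simpl. ring.
    - rewrite (linear_relaxation bv muv (fun s => X s 2%nat + X s 3%nat)); auto; try lra.
      + rewrite !Hhist by lra. simpl. ring.
      + apply cont_from_plus; auto.
      + intros s Hs. eapply dlim_eq; [apply dlim_plus; apply Hder; auto|].
        unfold truncated_rate, bilinear_rate.
        destruct (Hcl s 2%nat ltac:(lia)) as [_ ->]. destruct (Hcl s 3%nat ltac:(lia)) as [_ ->]. ring. }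
  assert (Hcl3 : forall t, clamp 0 Sv0 (X t 3%nat) = X t 3%nat).
  { intros t. apply clamp_id. generalize (HN t) (Hbox 2%nat t ltac:(lia)) (Hbox 3%nat t ltac:(lia)). lra. }
  assert (Hratio : forall t, X t 3%nat / Sv0 = X t 3%nat / (X t 2%nat + X t 3%nat))
    by (intros; rewrite HN; auto).
  split; [apply Hcont; lia|]. split; [apply Hcont; lia|].
  split; [apply Hcont; lia|]. split; [apply Hcont; lia|]. split.
  - intros th Hth. rewrite !Hhist by lra. repeat split.
  - intros t Ht.
    destruct (Hcl t 0%nat ltac:(lia)) as [E0 E0']. destruct (Hcl t 1%nat ltac:(lia)) as [E1 E1'].
    destruct (Hcl t 2%nat ltac:(lia)) as [E2 E2']. destruct (Hcl t 3%nat ltac:(lia)) as [E3 E3'].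
    destruct (Hcl (t - tau) 0%nat ltac:(lia)) as [D0 _].
    repeat split; (eapply dlim_eq; [apply Hder; [lia|exact Ht]|]); unfold truncated_rate, bilinear_rate;
      rewrite ?E0, ?E0', ?E1, ?E1', ?E2, ?E2', ?E3, ?E3', ?D0, ?Hcl3.
    + rewrite <- Hratio. field. lra.
    + rewrite <- Hratio. field. lra.
    + ring.
    + ring.
Qed.

Lemma exists_solution_from_constant_history tau : 0 <= tau ->
  exists x1 x2 x3 x4, is_solution bh bv muh muv Cvh Chv tau
    (fun _ => Sh0) (fun _ => q) (fun _ => Sv0 - q) (fun _ => q) x1 x2 x3 x4.
Proof.
  intros Htau. assert (HSv := Sv0_pos bv muv bv_pos muv_pos).
  assert (HM : 0 <= clamp_bound) by (destruct (clamp_bound_ge 0 ltac:(lia)); generalize (box_top_pos 0); lra).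
  assert (HA : 0 < coefficient_bound).
  { unfold coefficient_bound. assert (0 < Cvh / Sv0) by (apply Rdiv_lt_0_compat; lra). lra. }
  destruct (delay_ode_exists 4 tau constant_history truncated_rate
              ((2 * clamp_bound + 1) * coefficient_bound)
              (coefficient_bound + coefficient_bound * (clamp_bound * clamp_bound)
               + coefficient_bound * clamp_bound))
    as [X [Hhist [Hlip Hder]]]; auto.
  { apply Rmult_lt_0_compat; lra. }
  { assert (0 <= coefficient_bound * (clamp_bound * clamp_bound)) by (apply Rmult_le_pos; nra). nra. }
  { intros; apply truncated_rate_lipschitz; auto. }
  { intros; apply truncated_rate_bounded; auto. }
  exists (fun t => X t 0%nat), (fun t => X t 1%nat), (fun t => X t 2%nat), (fun t => X t 3%nat).
  apply (truncated_solution_is_solution tau X Hhist); auto.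
  intros k a Hk. eapply cont_from_lipschitz; [|intros; apply Hlip; auto].
  apply Rle_trans with (Rabs (truncated_rate 0 (X 0) (X 0))); [apply Rabs_pos|].
  apply truncated_rate_bounded. lia.
Qed.

End TruncatedSystem.

Lemma cont_on_const c a b : cont_on (fun _ => c) a b.
Proof. intros x _ eps Heps. exists 1. split; [lra|]. intros. rewrite Rminus_diag, Rabs_R0. lra. Qed.

Lemma dfe_unstable bh bv muh muv Cvh Chv tau :
  0 < bh -> 0 < bv -> 0 < muh -> 0 < muv -> 0 < Cvh -> 0 < Chv -> 0 <= tau ->
  muh * muv < Cvh * Chv * (bh / muh) ->
  eq_unstable bh bv muh muv Cvh Chv tau (bh / muh) 0 (bv / muv) 0.
Proof.
  intros Hbh Hbv Hmuh Hmuv HCvh HChv Htau HR Hst.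
  assert (HSh := Sh0_pos bh muh Hbh Hmuh). assert (HSv := Sv0_pos bv muv Hbv Hmuv).
  destruct (instability_parameters bh bv muh muv Cvh Chv tau) as [c [s0 [Hc [Hs0 HJ]]]]; auto.
  set (s := Rmin (s0 / 2) (Rmin (bh / muh / 2) (bv / muv / 2))).
  assert (Hs1 : s <= s0 / 2) by apply Rmin_l.
  assert (Hs2 : s <= bh / muh / 2) by (eapply Rle_trans; [apply Rmin_r|apply Rmin_l]).
  assert (Hs3 : s <= bv / muv / 2) by (eapply Rle_trans; [apply Rmin_r|apply Rmin_r]).
  assert (Hs : 0 < s) by (unfold s; repeat apply Rmin_glb_lt; lra).
  destruct (HJ s ltac:(lra)) as [J1 J2].
  destruct (Hst s Hs) as [d [Hd Hclose]].
  set (q := Rmin (d / 2) (bv / muv / 2)).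
  assert (Hq1 : q <= d / 2) by apply Rmin_l. assert (Hq2 : q <= bv / muv / 2) by apply Rmin_r.
  assert (Hq : 0 < q) by (unfold q; apply Rmin_glb_lt; lra).
  destruct (exists_solution_from_constant_history bh bv muh muv Cvh Chv q) with (tau := tau)
    as [x1 [x2 [x3 [x4 Hsol]]]]; auto; try lra.
  assert (Hstay := Hclose (fun _ => bh / muh) (fun _ => q) (fun _ => bv / muv - q) (fun _ => q) x1 x2 x3 x4).
  specialize (Hstay ltac:(repeat split; try apply cont_on_const; lra)).
  specialize (Hstay ltac:(intros th _; rewrite Rminus_diag, Rabs_R0, Rminus_0_r;
                           replace (bv / muv - q - bv / muv) with (- q) by ring;
                           rewrite Rabs_Ropp, Rabs_right by lra; repeat split; lra)).
  specialize (Hstay Hsol).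
  set (m := Rmin q (c * q) / 2).
  assert (Hcq : 0 < c * q) by (apply Rmult_lt_0_compat; lra).
  assert (Hm1 : m < q) by (unfold m; generalize (Rmin_l q (c * q)); lra).
  assert (Hm2 : m < c * q) by (unfold m; generalize (Rmin_r q (c * q)); lra).
  assert (Hm : 0 < m) by (unfold m; generalize (Rmin_glb_lt q (c * q) 0 Hq Hcq); lra).
  assert (Hgrow := escape_estimate bh bv muh muv Cvh Chv tau Hbh Hbv Hmuh Hmuv HCvh HChv Htau
                     c s m q x1 x2 x3 x4).
  specialize (Hgrow Hc Hs Hm Hm1 Hm2 ltac:(lra) ltac:(lra) J1 J2 Hsol).
  specialize (Hgrow ltac:(intros t Ht; destruct (Hstay t Ht) as (S1 & _ & S3 & _); auto)).
  assert (Ht : 0 <= 1 / m) by (left; apply Rdiv_lt_0_compat; lra).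
  specialize (Hgrow (1 / m) Ht). destruct (Hstay (1 / m) Ht) as (_ & S2 & _ & _).
  rewrite Rminus_0_r in S2. apply Rabs_def2 in S2.
  assert (He := exp_ineq1_le (s * (1 / m))).
  assert (m * (1 + s * (1 / m)) = m + s) by (field; lra).
  assert (m * (1 + s * (1 / m)) <= m * exp (s * (1 / m))) by (apply Rmult_le_compat_l; lra).
  lra.
Qed.

Lemma basic_reproduction_number_lt_1 bh muh muv Cvh Chv :
  0 < muh -> 0 < muv -> sqrt (Cvh * Chv * bh / (muh ^ 2 * muv)) < 1 ->
  Cvh * Chv * (bh / muh) < muh * muv.
Proof.
  intros Hmuh Hmuv HR.
  assert (HX : Cvh * Chv * (bh / muh) = Cvh * Chv * bh / (muh ^ 2 * muv) * (muh * muv)) by (field; lra).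
  assert (Cvh * Chv * bh / (muh ^ 2 * muv) < 1).
  { apply Rnot_le_lt. intros Hle. apply sqrt_le_1_alt in Hle. rewrite sqrt_1 in Hle. lra. }
  rewrite HX. assert (0 < muh * muv) by nra. nra.
Qed.

Lemma basic_reproduction_number_gt_1 bh muh muv Cvh Chv :
  0 < muh -> 0 < muv -> sqrt (Cvh * Chv * bh / (muh ^ 2 * muv)) > 1 ->
  muh * muv < Cvh * Chv * (bh / muh).
Proof.
  intros Hmuh Hmuv HR.
  assert (HX : Cvh * Chv * (bh / muh) = Cvh * Chv * bh / (muh ^ 2 * muv) * (muh * muv)) by (field; lra).
  assert (1 < Cvh * Chv * bh / (muh ^ 2 * muv)).
  { apply Rnot_le_lt. intros Hle. apply sqrt_le_1_alt in Hle. rewrite sqrt_1 in Hle. lra. }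
  rewrite HX. assert (0 < muh * muv) by nra. nra.
Qed.

Theorem theorem2 (bh bv muh muv Cvh Chv tau : R) :
  0 < bh -> 0 < bv -> 0 < muh -> 0 < muv -> 0 < Cvh -> 0 < Chv -> 0 <= tau ->
  (sqrt (Cvh * Chv * bh / (muh ^ 2 * muv)) < 1 ->
     loc_asym_stable bh bv muh muv Cvh Chv tau (bh / muh) 0 (bv / muv) 0) /\
  (sqrt (Cvh * Chv * bh / (muh ^ 2 * muv)) > 1 ->
     eq_unstable bh bv muh muv Cvh Chv tau (bh / muh) 0 (bv / muv) 0).
Proof.
  intros Hbh Hbv Hmuh Hmuv HCvh HChv Htau. split; intros HR.
  - apply loc_asym_stable_of_exponential_bound, dfe_exponential_bound; auto.
    apply basic_reproduction_number_lt_1; auto.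
  - apply dfe_unstable; auto. apply basic_reproduction_number_gt_1; auto.
Qed.
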